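(* Let $M_d$ denote the algebra of complex $d\times d$ matrices and $id$ the identity map on $M_d$. Let $L:M_d\to M_d$ be given by $$L a = i[h,a] + F a - \tfrac12\{F(\mathbf{1}_d),a\},$$ where $h=h^*\in M_d$ and $F:M_d\to M_d$ is a completely positive linear map. For $t\ge 0$ let $L_t:M_d\to M_d$ be linear maps of the form $L_t = B_t + Z_t$, where $B_t:M_d\to M_d$ is completely positive for every $t\ge0$ and $$Z_t a = -\tfrac12\{B_t(\mathbf{1}_d),a\} + i[h_t,a],\qquad h_t = h_t^*\in M_d .$$ Let $A_t$, $t\ge0$, be the solution of $$\frac{dA_t}{dt} = L A_t + \int_0^t ds\, L_{t-s}A_s,\qquad A_0=id.$$ Let $N_t$, $t\ge 0$, be the solution of the normalization equation $$\frac{dN_t}{dt} = L N_t + \int_0^t ds\, Z_{t-s} N_s,\qquad N_0 = id.$$ If $N_t$ is completely positive for all $t\ge 0$, then $A_t$ is completely positive for all $t\ge0$.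
   Context: $\{a,b\}=ab+ba$ denotes the anticommutator and $[a,b]=ab-ba$ the commutator; $\mathbf{1}_d$ is the identity matrix. Products of maps such as $L A_t$ denote composition of linear maps on $M_d$. A linear map $\Phi:M_d\to M_d$ is completely positive if $\Phi\otimes id_{M_n}$ is positive for every $n$. *)

From Stdlib Require Import Reals.
From Coquelicot Require Import Coquelicot.
From mathcomp Require Import ssreflect ssrfun ssrbool eqtype ssrnat seq fintype bigop.

Open Scope R_scope.

Definition Mat (d : nat) := 'I_d -> 'I_d -> C.

Definition csum (n : nat) (f : 'I_n -> C) : C := \big[Cplus/RtoC 0]_(i < n) f i.

Definition madd {d} (a b : Mat d) : Mat d := fun i j => Cplus (a i j) (b i j).
Definition mscale {d} (c : C) (a : Mat d) : Mat d := fun i j => Cmult c (a i j).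
Definition mmul {d} (a b : Mat d) : Mat d :=
  fun i j => csum d (fun k => Cmult (a i k) (b k j)).
Definition madj {d} (a : Mat d) : Mat d := fun i j => Cconj (a j i).
Definition mid (d : nat) : Mat d :=
  fun i j => if i == j then RtoC 1 else RtoC 0.

Definition comm {d} (a b : Mat d) : Mat d :=
  madd (mmul a b) (mscale (RtoC (-1)) (mmul b a)).
Definition anticomm {d} (a b : Mat d) : Mat d := madd (mmul a b) (mmul b a).

Definition hermitian {d} (h : Mat d) : Prop := madj h = h.

Definition is_linear_map {d} (Phi : Mat d -> Mat d) : Prop :=
  (forall a b, Phi (madd a b) = madd (Phi a) (Phi b)) /\
  (forall (c : C) a, Phi (mscale c a) = mscale c (Phi a)).

(* An element X of M_d (x) M_n, identified with M_n(M_d): X i j is the (i,j)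
   block; entry X i j k l sits in row (i,k), column (j,l). *)
Definition psd_block (d n : nat) (X : 'I_n -> 'I_n -> Mat d) : Prop :=
  forall v : 'I_n -> 'I_d -> C,
    let q := csum n (fun i => csum n (fun j => csum d (fun k => csum d (fun l =>
               Cmult (Cmult (Cconj (v i k)) (X i j k l)) (v j l))))) in
    Im q = 0 /\ 0 <= Re q.

Definition ampl {d} (n : nat) (Phi : Mat d -> Mat d) (X : 'I_n -> 'I_n -> Mat d)
  : 'I_n -> 'I_n -> Mat d := fun i j => Phi (X i j).

Definition CP {d} (Phi : Mat d -> Mat d) : Prop :=
  is_linear_map Phi /\
  forall (n : nat) (X : 'I_n -> 'I_n -> Mat d),
    psd_block d n X -> psd_block d n (ampl n Phi X).

Definition Lgen {d} (h : Mat d) (F : Mat d -> Mat d) (a : Mat d) : Mat d :=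
  madd (mscale Ci (comm h a))
       (madd (F a) (mscale (RtoC (-1/2)) (anticomm (F (mid d)) a))).

Definition Zgen {d} (h' : Mat d) (B : Mat d -> Mat d) (a : Mat d) : Mat d :=
  madd (mscale (RtoC (-1/2)) (anticomm (B (mid d)) a)) (mscale Ci (comm h' a)).

Definition cont_nonneg (f : R -> C) : Prop :=
  (forall t, 0 < t -> continuous f t) /\
  filterlim f (at_right 0) (locally (f 0)).

Definition is_solution {d} (K0 : Mat d -> Mat d) (K : R -> Mat d -> Mat d)
  (X : R -> Mat d -> Mat d) : Prop :=
  X 0 = (fun a => a) /\
  (forall a i j, cont_nonneg (fun t => X t a i j)) /\
  (forall t, 0 < t -> forall a i j,
     is_derive (K := R_AbsRing) (V := C_R_NormedModule)
       (fun s => X s a i j) t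
       (Cplus (K0 (X t a) i j)
              (RInt (V := C_R_CompleteNormedModule)
                    (fun s => K (t - s) (X s a) i j) 0 t))).

(* Write K * u for the convolution t |-> int_0^t K_{t-s} (u s) ds.  Both A_t a and
   N_t a + (N * B * A a)(t) solve the Volterra equation u = a + int_0^. (L u + Z * u + B * A a);
   by associativity of * and Fubini on a triangle, and since solutions of such equations are
   unique (a Gronwall-type factorial bound), this gives the renewal identity A = N + N * B * A.
   Iterating it, A_t is the limit of the Dyson partial sums D_0 = N, D_(n+1) = N + N * B * D_n,
   whose remainder (N * B)^(n+1) * A is bounded by M (C t)^n / n!.  Each D_n is completely
   positive because complete positivity is preserved by composition, sums and integrals, and
   a pointwise limit of completely positive maps is completely positive. *)

From Stdlib Require Import Reals Lra Lia FunctionalExtensionality Factorial.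
From Coquelicot Require Import Coquelicot.
From HB Require Import structures.
From mathcomp Require Import ssreflect ssrfun ssrbool eqtype ssrnat seq fintype bigop.
Open Scope R_scope.
Set Implicit Arguments. Unset Strict Implicit.

(** * Finite sums, matrices and linear maps *)

HB.instance Definition _ :=
  Monoid.isComLaw.Build C (RtoC 0) Cplus Cplus_assoc Cplus_comm Cplus_0_l.

Lemma csum_plus n (f g : 'I_n -> C) :
  csum n (fun i => Cplus (f i) (g i)) = Cplus (csum n f) (csum n g).
Proof. by rewrite /csum big_split. Qed.

Lemma csum_ext n (f g : 'I_n -> C) : (forall i, f i = g i) -> csum n f = csum n g.
Proof. by move=> fg; apply: eq_bigr => i _. Qed.

Lemma csum_multl n c (f : 'I_n -> C) :
  Cmult c (csum n f) = csum n (fun i => Cmult c (f i)).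
Proof. by apply: (big_morph (Cmult c)) => [x y|]; ring. Qed.

Lemma csum_delta n (i : 'I_n) (f : 'I_n -> C) :
  csum n (fun k => if k == i then f k else RtoC 0) = f i.
Proof. by rewrite /csum (bigD1 i) //= eqxx big1 ?Cplus_0_r // => k /negbTE ->. Qed.

Definition mzero d : Mat d := fun _ _ => RtoC 0.
Arguments mzero : clear implicits.

Definition msub d (x y : Mat d) : Mat d := fun i j => Cminus (x i j) (y i j).

Lemma mat_ext d (a b : Mat d) : (forall i j, a i j = b i j) -> a = b.
Proof.
by move=> ab; apply: functional_extensionality => i; apply: functional_extensionality.
Qed.

Section MatrixAddMonoid.
Variable d : nat.
Lemma madd_assoc : associative (@madd d).
Proof. by move=> a b c; apply: mat_ext => i j; rewrite /madd; ring. Qed.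
Lemma madd_comm : commutative (@madd d).
Proof. by move=> a b; apply: mat_ext => i j; rewrite /madd; ring. Qed.
Lemma madd0m : left_id (mzero d) (@madd d).
Proof. by move=> a; apply: mat_ext => i j; rewrite /madd /mzero; ring. Qed.
End MatrixAddMonoid.

HB.instance Definition _ d :=
  Monoid.isComLaw.Build (Mat d) (mzero d) (@madd d) (@madd_assoc d) (@madd_comm d) (@madd0m d).

Definition msum d n (f : 'I_n -> Mat d) : Mat d := \big[@madd d/mzero d]_(k < n) f k.

Lemma msum_entry d n (f : 'I_n -> Mat d) i j : msum f i j = csum n (fun k => f k i j).
Proof. exact: (big_morph (fun M : Mat d => M i j)). Qed.

Definition munit d (k l : 'I_d) : Mat d :=
  fun i j => if (i == k) && (j == l) then RtoC 1 else RtoC 0.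

Lemma msum_munit d (x : Mat d) :
  x = msum (fun k => msum (fun l => mscale (x k l) (munit k l))).
Proof.
apply: mat_ext => i j; rewrite msum_entry -(csum_delta i (fun k => x k j)).
apply: csum_ext => k; rewrite msum_entry.
rewrite -(csum_delta j (fun l => if k == i then x k l else RtoC 0)).
apply: csum_ext => l; rewrite /mscale /munit (eq_sym i k) (eq_sym j l).
by case: (k == i); case: (l == j) => /=; ring.
Qed.

Section LinearMaps.
Variables (d : nat) (Phi : Mat d -> Mat d).
Hypothesis Phi_lin : is_linear_map Phi.

Lemma linear_map0 : Phi (mzero d) = mzero d.
Proof.
have -> : mzero d = mscale (RtoC 0) (mzero d).
  by apply: mat_ext => i j; rewrite /mscale /mzero; ring.
by rewrite (proj2 Phi_lin); apply: mat_ext => i j; rewrite /mscale /mzero; ring.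
Qed.

Lemma linear_map_msum n (f : 'I_n -> Mat d) : Phi (msum f) = msum (fun k => Phi (f k)).
Proof. apply: big_morph; [exact: (proj1 Phi_lin) | exact: linear_map0]. Qed.

Lemma linear_map_msub x y : Phi (msub x y) = msub (Phi x) (Phi y).
Proof.
case: Phi_lin => Ha Hs; have -> : msub x y = madd x (mscale (RtoC (-1)) y).
  by apply: mat_ext => i j; rewrite /msub /madd /mscale /Cminus; ring.
by rewrite Ha Hs; apply: mat_ext => i j; rewrite /msub /madd /mscale /Cminus; ring.
Qed.

Lemma linear_map_entry x i j :
  Phi x i j = csum d (fun k => csum d (fun l => Cmult (x k l) (Phi (munit k l) i j))).
Proof.
rewrite {1}(msum_munit x) linear_map_msum msum_entry; apply: csum_ext => k.
rewrite linear_map_msum msum_entry; apply: csum_ext => l.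
by rewrite (proj2 Phi_lin).
Qed.

End LinearMaps.

Lemma mmul_addr d (a b c : Mat d) : mmul a (madd b c) = madd (mmul a b) (mmul a c).
Proof. by apply: mat_ext => i j; rewrite /mmul /madd -csum_plus; apply: csum_ext => k; ring. Qed.

Lemma mmul_addl d (a b c : Mat d) : mmul (madd a b) c = madd (mmul a c) (mmul b c).
Proof. by apply: mat_ext => i j; rewrite /mmul /madd -csum_plus; apply: csum_ext => k; ring. Qed.

Lemma mmul_scaler d c (a b : Mat d) : mmul a (mscale c b) = mscale c (mmul a b).
Proof. by apply: mat_ext => i j; rewrite /mmul /mscale csum_multl; apply: csum_ext => k; ring. Qed.

Lemma mmul_scalel d c (a b : Mat d) : mmul (mscale c a) b = mscale c (mmul a b).
Proof. by apply: mat_ext => i j; rewrite /mmul /mscale csum_multl; apply: csum_ext => k; ring. Qed.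

Lemma comm_linear d (h : Mat d) : is_linear_map (comm h).
Proof.
split=> [a b|c a]; rewrite /comm ?mmul_addr ?mmul_addl ?mmul_scaler ?mmul_scalel;
  by apply: mat_ext => i j; rewrite /madd /mscale; ring.
Qed.

Lemma anticomm_linear d (h : Mat d) : is_linear_map (anticomm h).
Proof.
split=> [a b|c a]; rewrite /anticomm ?mmul_addr ?mmul_addl ?mmul_scaler ?mmul_scalel;
  by apply: mat_ext => i j; rewrite /madd /mscale; ring.
Qed.

Lemma madd_linear d (P Q : Mat d -> Mat d) :
  is_linear_map P -> is_linear_map Q -> is_linear_map (fun a => madd (P a) (Q a)).
Proof.
move=> [Pa Ps] [Qa Qs]; split=> [a b|c a]; rewrite ?Pa ?Qa ?Ps ?Qs;
  by apply: mat_ext => i j; rewrite /madd /mscale; ring.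
Qed.

Lemma Lgen_linear d (h : Mat d) F : is_linear_map F -> is_linear_map (Lgen h F).
Proof.
move=> [Fa Fs]; case: (comm_linear h) => Ca Cs.
case: (anticomm_linear (F (mid d))) => Aa As.
split=> [a b|c a]; rewrite /Lgen ?Fa ?Ca ?Aa ?Fs ?Cs ?As;
  by apply: mat_ext => i j; rewrite /madd /mscale; ring.
Qed.

Lemma Zgen_linear d (h : Mat d) F : is_linear_map (Zgen h F).
Proof.
case: (comm_linear h) => Ca Cs; case: (anticomm_linear (F (mid d))) => Aa As.
split=> [a b|c a]; rewrite /Zgen ?Ca ?Aa ?Cs ?As;
  by apply: mat_ext => i j; rewrite /madd /mscale; ring.
Qed.

(** * Integrals of complex functions *)

Definition cint (f : R -> C) a b : C := RInt (V := C_R_CompleteNormedModule) f a b.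
Definition cex (f : R -> C) a b : Prop := ex_RInt (V := C_R_NormedModule) f a b.
Definition cis (f : R -> C) a b (l : C) : Prop := is_RInt (V := C_R_NormedModule) f a b l.

Lemma cis_cint f a b l : cis f a b l -> cint f a b = l.
Proof. exact: (is_RInt_unique (V := C_R_CompleteNormedModule)). Qed.

Lemma cex_cis f a b : cex f a b -> cis f a b (cint f a b).
Proof. exact: (RInt_correct (V := C_R_CompleteNormedModule)). Qed.

Lemma cis_plus f g a b lf lg : cis f a b lf -> cis g a b lg ->
  cis (fun s => Cplus (f s) (g s)) a b (Cplus lf lg).
Proof. exact: (is_RInt_plus (V := C_R_NormedModule)). Qed.

(* C is only a real normed module, so complex scaling is handled componentwise. *)
Lemma cis_cmul c f a b l : cis f a b l -> cis (fun s => Cmult c (f s)) a b (Cmult c l).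
Proof.
move=> fl; have fl1 := is_RInt_fct_extend_fst _ _ _ _ fl.
have fl2 := is_RInt_fct_extend_snd _ _ _ _ fl.
case: c => cr ci.
change (cis (fun s => (cr * fst (f s) - ci * snd (f s), cr * snd (f s) + ci * fst (f s))) a b
            (cr * fst l - ci * snd l, cr * snd l + ci * fst l)).
apply: (is_RInt_fct_extend_pair (U := R_NormedModule) (V := R_NormedModule)) => /=.
- by apply: (is_RInt_minus (V := R_NormedModule)); apply: (is_RInt_scal (V := R_NormedModule)).
- by apply: (is_RInt_plus (V := R_NormedModule)); apply: (is_RInt_scal (V := R_NormedModule)).
Qed.

Lemma cint_plus f g a b : cex f a b -> cex g a b ->
  cint (fun s => Cplus (f s) (g s)) a b = Cplus (cint f a b) (cint g a b).
Proof. by move=> /cex_cis fi /cex_cis gi; apply: cis_cint; apply: cis_plus. Qed.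

Lemma cex_cmul c f a b : cex f a b -> cex (fun s => Cmult c (f s)) a b.
Proof. by move=> /cex_cis fi; eexists; apply: cis_cmul fi. Qed.

Lemma cint_cmul c f a b : cex f a b -> cint (fun s => Cmult c (f s)) a b = Cmult c (cint f a b).
Proof. by move=> /cex_cis fi; apply: cis_cint; apply: cis_cmul. Qed.

Lemma cint_ext f g a b :
  (forall x, Rmin a b < x < Rmax a b -> f x = g x) -> cint f a b = cint g a b.
Proof. exact: (RInt_ext (V := C_R_CompleteNormedModule)). Qed.

Lemma cex_ext f g a b :
  (forall x, Rmin a b < x < Rmax a b -> f x = g x) -> cex f a b -> cex g a b.
Proof. exact: (ex_RInt_ext (V := C_R_NormedModule)). Qed.

Lemma cex_cmulr c f a b : cex f a b -> cex (fun s => Cmult (f s) c) a b.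
Proof. by move/(cex_cmul c); apply: cex_ext => x _; apply: Cmult_comm. Qed.

Lemma cint_minus f g a b : cex f a b -> cex g a b ->
  cint (fun s => Cminus (f s) (g s)) a b = Cminus (cint f a b) (cint g a b).
Proof.
move=> fi gi; rewrite (cint_ext (g := fun s => Cplus (f s) (Cmult (RtoC (-1)) (g s)))).
  by rewrite cint_plus ?cint_cmul //; [rewrite /Cminus; ring | exact: cex_cmul].
by move=> x _; rewrite /Cminus; ring.
Qed.

Lemma cint_chasles f a b c :
  cex f a b -> cex f b c -> Cplus (cint f a b) (cint f b c) = cint f a c.
Proof. exact: (RInt_Chasles (V := C_R_CompleteNormedModule)). Qed.

Lemma cint_const c a b : cint (fun _ => c) a b = Cmult (RtoC (b - a)) c.
Proof. by apply: cis_cint; have := is_RInt_const (V := C_R_NormedModule) a b c; rewrite scal_R_Cmult. Qed.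

Lemma cint_point f a : cint f a a = RtoC 0.
Proof. by rewrite /cint RInt_point. Qed.

Lemma cint_bound f a b M : cex f a b ->
  (forall x, Rmin a b <= x <= Rmax a b -> Cmod (f x) <= M) ->
  Cmod (cint f a b) <= Rabs (b - a) * M.
Proof.
move=> fi fM; rewrite Cmod_norm.
apply: (norm_RInt_le_const_abs (V := C_R_NormedModule)); last exact: cex_cis.
by move=> x Hx; rewrite -Cmod_norm; apply: fM.
Qed.

Lemma cis_csum n (f : 'I_n -> R -> C) (l : 'I_n -> C) a b :
  (forall k, cis (f k) a b (l k)) -> cis (fun s => csum n (fun k => f k s)) a b (csum n l).
Proof.
move=> fl; rewrite /csum; elim: (index_enum _) => [|k r IH].
  rewrite big_nil (_ : (fun s => _) = fun _ => RtoC 0); last first.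
    by apply: functional_extensionality => s; rewrite big_nil.
  by have := is_RInt_const (V := C_R_NormedModule) a b (RtoC 0); rewrite scal_R_Cmult Cmult_0_r.
rewrite big_cons (_ : (fun s => _) = fun s =>
  Cplus (f k s) (\big[Cplus/RtoC 0]_(j <- r) f j s)); first exact: cis_plus.
by apply: functional_extensionality => s; rewrite big_cons.
Qed.

Lemma cex_csum n (f : 'I_n -> R -> C) a b :
  (forall k, cex (f k) a b) -> cex (fun s => csum n (fun k => f k s)) a b.
Proof. by move=> fi; eexists; apply: cis_csum => k; apply: cex_cis. Qed.

Lemma cint_csum n (f : 'I_n -> R -> C) a b : (forall k, cex (f k) a b) ->
  cint (fun s => csum n (fun k => f k s)) a b = csum n (fun k => cint (f k) a b).
Proof. by move=> fi; apply: cis_cint; apply: cis_csum => k; apply: cex_cis. Qed.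

Lemma re_cint f a b : cex f a b -> Re (cint f a b) = RInt (fun s => Re (f s)) a b.
Proof. by move=> /cex_cis /is_RInt_fct_extend_fst /is_RInt_unique. Qed.

Lemma im_cint f a b : cex f a b -> Im (cint f a b) = RInt (fun s => Im (f s)) a b.
Proof. by move=> /cex_cis /is_RInt_fct_extend_snd /is_RInt_unique. Qed.

Definition mint d (f : R -> Mat d) a b : Mat d := fun i j => cint (fun s => f s i j) a b.
Definition mex d (f : R -> Mat d) a b : Prop := forall i j, cex (fun s => f s i j) a b.

Lemma mint_add d (f g : R -> Mat d) a b : mex f a b -> mex g a b ->
  mint (fun s => madd (f s) (g s)) a b = madd (mint f a b) (mint g a b).
Proof. by move=> fi gi; apply: mat_ext => i j; apply: cint_plus. Qed.

Lemma mint_scale d c (f : R -> Mat d) a b :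
  mex f a b -> mint (fun s => mscale c (f s)) a b = mscale c (mint f a b).
Proof. by move=> fi; apply: mat_ext => i j; apply: cint_cmul. Qed.

Lemma linear_map_mint d (Phi : Mat d -> Mat d) (f : R -> Mat d) a b :
  is_linear_map Phi -> mex f a b -> Phi (mint f a b) = mint (fun s => Phi (f s)) a b.
Proof.
move=> Phi_lin fi; apply: mat_ext => i j; rewrite (linear_map_entry Phi_lin) /mint.
rewrite (cint_ext (g := fun s => csum d (fun k => csum d (fun l =>
                      Cmult (f s k l) (Phi (munit k l) i j))))); last first.
  by move=> x _; rewrite (linear_map_entry Phi_lin).
rewrite cint_csum => [|k]; last by apply: cex_csum => l; apply: cex_cmulr.
apply: csum_ext => k; rewrite cint_csum => [|l]; last exact: cex_cmulr.
apply: csum_ext => l; rewrite Cmult_comm -cint_cmul //.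
by apply: cint_ext => x _; apply: Cmult_comm.
Qed.

(** * Continuous complex functions *)

Lemma Cmod_le_reim (c : C) : Cmod c <= Rabs (Re c) + Rabs (Im c).
Proof.
have H0 : 0 <= Rabs (Re c) + Rabs (Im c) by have := Rabs_pos (Re c); have := Rabs_pos (Im c); lra.
rewrite /Cmod -(sqrt_pow2 _ H0); apply: sqrt_le_1_alt.
rewrite -(pow2_abs (fst c)) -(pow2_abs (snd c)).
by have := Rabs_pos (Re c); have := Rabs_pos (Im c); rewrite /Re /Im; nra.
Qed.

Lemma im_le_Cmod (c : C) : Rabs (Im c) <= Cmod c.
Proof. by have := Rmax_Cmod c; have := Rmax_r (Rabs (fst c)) (Rabs (snd c)); rewrite /Im; lra. Qed.

Lemma Cminus_diag (x : C) : Cminus x x = RtoC 0.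
Proof. by rewrite /Cminus; ring. Qed.

Lemma Cminus_eq0 (x y : C) : Cminus x y = RtoC 0 -> x = y.
Proof.
move=> xy; have <- : Cplus (Cminus x y) y = x by rewrite /Cminus; ring.
by rewrite xy; ring.
Qed.

Lemma Cmod_small_eq (z w : C) : (forall eps, 0 < eps -> Cmod (Cminus z w) < eps) -> z = w.
Proof.
move=> small; apply/Cminus_eq0/Cmod_eq_0.
have := Cmod_ge_0 (Cminus z w); case: (Rle_lt_dec (Cmod (Cminus z w)) 0) => [|pos]; first lra.
by have := small _ pos; lra.
Qed.

Lemma Cmod_add3_le (a b c : C) : Cmod (Cplus a (Cplus b c)) <= Cmod a + Cmod b + Cmod c.
Proof. by have := Cmod_triangle a (Cplus b c); have := Cmod_triangle b c; lra. Qed.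

Definition ccont (f : R -> C) :=
  forall x, continuity_pt (fun t => Re (f t)) x /\ continuity_pt (fun t => Im (f t)) x.

Lemma ccont_ext f g : (forall x, f x = g x) -> ccont f -> ccont g.
Proof. by move=> fg; rewrite (functional_extensionality _ _ fg). Qed.

Lemma ccont_const c : ccont (fun _ => c).
Proof. by move=> x; split; apply: continuity_pt_const. Qed.

Lemma ccont_plus f g : ccont f -> ccont g -> ccont (fun t => Cplus (f t) (g t)).
Proof.
move=> fc gc x; case: (fc x) => f1 f2; case: (gc x) => g1 g2.
by split; apply: continuity_pt_plus.
Qed.

Lemma ccont_mult f g : ccont f -> ccont g -> ccont (fun t => Cmult (f t) (g t)).
Proof.
move=> fc gc x; case: (fc x) => f1 f2; case: (gc x) => g1 g2; split.
- apply: (continuity_pt_ext (fun t => Re (f t) * Re (g t) - Im (f t) * Im (g t))).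
    by move=> t; rewrite re_mult.
  by apply: continuity_pt_minus; apply: continuity_pt_mult.
- apply: (continuity_pt_ext (fun t => Re (f t) * Im (g t) + Im (f t) * Re (g t))).
    by move=> t; rewrite im_mult.
  by apply: continuity_pt_plus; apply: continuity_pt_mult.
Qed.

Lemma ccont_cmul c f : ccont f -> ccont (fun t => Cmult c (f t)).
Proof. exact/ccont_mult/ccont_const. Qed.

Lemma ccont_minus f g : ccont f -> ccont g -> ccont (fun t => Cminus (f t) (g t)).
Proof.
move=> fc gc; apply: (ccont_ext (f := fun t => Cplus (f t) (Cmult (RtoC (-1)) (g t)))).
  by move=> t; rewrite /Cminus; ring.
exact/ccont_plus/ccont_cmul.
Qed.

Lemma ccont_csum n (f : 'I_n -> R -> C) :
  (forall k, ccont (f k)) -> ccont (fun t => csum n (fun k => f k t)).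
Proof.
move=> fc; rewrite /csum; elim: (index_enum _) => [|k r IH].
  by apply: (ccont_ext (f := fun _ => RtoC 0)) => [t|]; rewrite ?big_nil //; apply: ccont_const.
apply: (ccont_ext (f := fun t => Cplus (f k t) (\big[Cplus/RtoC 0]_(j <- r) f j t))).
  by move=> t; rewrite big_cons.
exact: ccont_plus.
Qed.

Lemma ccont_cex f a b : ccont f -> cex f a b.
Proof.
move=> fc; rewrite /cex (_ : f = fun t => (fst (f t), snd (f t))); last first.
  by apply: functional_extensionality => t; case: (f t).
apply: (ex_RInt_fct_extend_pair (U := R_NormedModule) (V := R_NormedModule)) => /=;
  apply: ex_RInt_continuous => z _; apply/continuity_pt_filterlim; [exact: (proj1 (fc z)) | exact: (proj2 (fc z))].
Qed.

Definition reim (c : C) : R := Rabs (Re c) + Rabs (Im c).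

Lemma reim_ge0 c : 0 <= reim c.
Proof. by rewrite /reim; have := Rabs_pos (Re c); have := Rabs_pos (Im c); lra. Qed.

Lemma ccont_reim f x : ccont f -> continuity_pt (fun t => reim (f t)) x.
Proof.
move=> fc; apply: continuity_pt_plus; apply: continuity_pt_comp; try exact: Rcontinuity_abs.
exact: (proj1 (fc x)). exact: (proj2 (fc x)).
Qed.

Lemma cont_bounded (g : R -> R) a b :
  (forall x, continuity_pt g x) -> exists M, 0 <= M /\ forall x, a <= x <= b -> g x <= M.
Proof.
move=> gc; case: (Rle_lt_dec a b) => ab; last by exists 0; split=> [|x]; lra.
case: (continuity_ab_maj g a b ab (fun c _ => gc c)) => x0 [Hx0 _].
by exists (Rmax 0 (g x0)); split=> [|x /Hx0]; [apply: Rmax_l | have := Rmax_r 0 (g x0); lra].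
Qed.

Lemma ccont_bound f a b : ccont f ->
  exists M, 0 <= M /\ forall x, a <= x <= b -> Cmod (f x) <= M.
Proof.
move=> fc; case: (cont_bounded a b (fun x => ccont_reim x fc)) => M [M_ge0 HM].
by exists M; split=> // x /HM; apply: Rle_trans (Cmod_le_reim _).
Qed.

Lemma ccont_unif f a b eps : ccont f -> 0 < eps -> exists del, 0 < del /\
  forall x y, a <= x <= b -> a <= y <= b -> Rabs (x - y) < del -> Cmod (Cminus (f x) (f y)) < eps.
Proof.
move=> fc eps_gt0; have eps2 : 0 < eps / 2 by lra.
case: (Heine_cor2 (f := fun t => Re (f t)) (a := a) (b := b) (fun x _ => proj1 (fc x))
                  (mkposreal _ eps2)) => d1 H1.
case: (Heine_cor2 (f := fun t => Im (f t)) (a := a) (b := b) (fun x _ => proj2 (fc x))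
                  (mkposreal _ eps2)) => d2 H2.
exists (Rmin d1 d2); split; first by apply: Rmin_pos; apply: cond_pos.
move=> x y Hx Hy Hxy; apply: Rle_lt_trans (Cmod_le_reim _) _.
have /= := H1 x y Hx Hy (Rlt_le_trans _ _ _ Hxy (Rmin_l _ _)).
have /= := H2 x y Hx Hy (Rlt_le_trans _ _ _ Hxy (Rmin_r _ _)).
by rewrite /Re /Im /Rminus; lra.
Qed.

Lemma ccont_of_eps f :
  (forall x eps, 0 < eps -> exists del, 0 < del /\
     forall y, Rabs (y - x) < del -> Cmod (Cminus (f y) (f x)) < eps) ->
  ccont f.
Proof.
move=> H x; split=> eps /(H x) [del [del_gt0 Hdel]]; exists del; split=> // y [_ Hyx];
  apply: Rle_lt_trans (Hdel y Hyx); rewrite /= /R_dist.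
- have -> : Re (f y) - Re (f x) = Re (Cminus (f y) (f x)) by rewrite /Cminus /Re /=; ring.
  exact: re_le_Cmod.
- have -> : Im (f y) - Im (f x) = Im (Cminus (f y) (f x)) by rewrite /Cminus /Im /=; ring.
  exact: im_le_Cmod.
Qed.

(** * Derivatives, joint continuity and parametric integrals *)

Definition cderiv (F : R -> C) (t : R) (l : C) :=
  is_derive (K := R_AbsRing) (V := C_R_NormedModule) F t l.

Lemma cderiv_of_eps (F : R -> C) t l :
  (forall eps, 0 < eps -> exists del, 0 < del /\ forall y, Rabs (y - t) < del ->
     Cmod (Cminus (Cminus (F y) (F t)) (Cmult (RtoC (y - t)) l)) <= eps * Rabs (y - t)) ->
  cderiv F t l.
Proof.
move=> H; split; first exact: is_linear_scal_l.
move=> x /is_filter_lim_locally_unique <- eps.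
case: (H eps (cond_pos eps)) => del [del_gt0 Hdel]; exists (mkposreal _ del_gt0) => y Hy.
by have := Hdel y Hy; rewrite Cmod_norm scal_R_Cmult.
Qed.

Lemma cderiv_minus F G t l1 l2 : cderiv F t l1 -> cderiv G t l2 ->
  cderiv (fun x => Cminus (F x) (G x)) t (Cminus l1 l2).
Proof. exact: (is_derive_minus (V := C_R_NormedModule)). Qed.

Lemma cderiv0_eq (D : R -> C) t : (forall x, cderiv D x (RtoC 0)) -> D t = D 0.
Proof.
move=> D'0; case: (Rtotal_order 0 t) => [t_gt0|[<-|t_lt0]] //.
- by symmetry; apply: (eq_is_derive (V := C_R_NormedModule)) => // x _; apply: D'0.
- by apply: (eq_is_derive (V := C_R_NormedModule)) => // x _; apply: D'0.
Qed.

Lemma cderiv_cint p a t : ccont p -> cderiv (fun x => cint p a x) t (p t).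
Proof.
move=> pc; apply: cderiv_of_eps => eps eps_gt0.
case: (ccont_unif (t - 1) (t + 1) pc eps_gt0) => del [del_gt0 Hdel].
exists (Rmin del 1); split=> [|y Hy]; first by apply: Rmin_pos; lra.
have Hy1 : Rabs (y - t) < 1 by apply: Rlt_le_trans Hy (Rmin_r _ _).
have Hyd : Rabs (y - t) < del by apply: Rlt_le_trans Hy (Rmin_l _ _).
have -> : Cminus (cint p a y) (cint p a t) = cint p t y.
  rewrite -(cint_chasles (b := t)); try exact: ccont_cex.
  by rewrite /Cminus; ring.
rewrite -cint_const -cint_minus; try exact/ccont_cex/ccont_const.
rewrite Rmult_comm; apply: cint_bound => [|x Hx].
  by apply/ccont_cex/ccont_minus => //; apply: ccont_const.
apply/Rlt_le/Hdel; try lra.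
- by move: Hx Hy1; rewrite /Rmin /Rmax; case: Rle_dec => _; split_Rabs; lra.
- by move: Hx Hyd; rewrite /Rmin /Rmax; case: Rle_dec => _; split_Rabs; lra.
exact: ccont_cex.
Qed.

(* Joint continuity, in the form used below: boundedness and uniform continuity on every
   square [-K, K]^2 (equivalent to continuity on R^2 by Heine's theorem). *)
Definition ccont2 (P : R -> R -> C) :=
  forall K, 0 <= K ->
   (exists M, 0 <= M /\ forall x y, Rabs x <= K -> Rabs y <= K -> Cmod (P x y) <= M) /\
   (forall eps, 0 < eps -> exists del, 0 < del /\ forall x y x' y',
       Rabs x <= K -> Rabs y <= K -> Rabs x' <= K -> Rabs y' <= K ->
       Rabs (x - x') < del -> Rabs (y - y') < del -> Cmod (Cminus (P x y) (P x' y')) < eps).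

Lemma ccont2_ext P Q : (forall x y, P x y = Q x y) -> ccont2 P -> ccont2 Q.
Proof.
by move=> PQ; rewrite (_ : Q = P) //; do 2!apply: functional_extensionality => ?; rewrite PQ.
Qed.

Lemma Rabs_affine_le a b x y K :
  Rabs x <= K -> Rabs y <= K -> Rabs (a * x + b * y) <= (Rabs a + Rabs b) * K.
Proof.
move=> Hx Hy; apply: Rle_trans (Rabs_triang _ _) _; rewrite !Rabs_mult.
by have := Rabs_pos a; have := Rabs_pos b; nra.
Qed.

Lemma Rabs_affine_sub_le a b x y x' y' del : Rabs (x - x') < del -> Rabs (y - y') < del ->
  Rabs ((a * x + b * y) - (a * x' + b * y')) <= (Rabs a + Rabs b) * del.
Proof.
move=> Hx Hy; have -> : (a * x + b * y) - (a * x' + b * y') = a * (x - x') + b * (y - y') by ring.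
apply: Rle_trans (Rabs_triang _ _) _; rewrite !Rabs_mult.
by have := Rabs_pos a; have := Rabs_pos b; nra.
Qed.

Lemma Rabs_between_le p q u K :
  Rabs p <= K -> Rabs q <= K -> Rmin p q <= u <= Rmax p q -> Rabs u <= K.
Proof. by rewrite /Rmin /Rmax; case: Rle_dec => _; split_Rabs; lra. Qed.

Lemma ccont2_affine_comp P a1 b1 a2 b2 :
  ccont2 P -> ccont2 (fun x y => P (a1 * x + b1 * y) (a2 * x + b2 * y)).
Proof.
move=> Pc K K_ge0.
set S := Rabs a1 + Rabs b1 + Rabs a2 + Rabs b2.
have := Rabs_pos a1; have := Rabs_pos b1; have := Rabs_pos a2; have := Rabs_pos b2 => ? ? ? ?.
have S_ge0 : 0 <= S by rewrite /S; lra.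
case: (Pc (S * K) ltac:(nra)) => [[M [M_ge0 HM]] HU].
have in_square a b : Rabs a + Rabs b <= S -> forall x y,
    Rabs x <= K -> Rabs y <= K -> Rabs (a * x + b * y) <= S * K.
  move=> abS x y Hx Hy; apply: Rle_trans (Rabs_affine_le a b Hx Hy) _.
  by apply: Rmult_le_compat_r; lra.
have S1 : Rabs a1 + Rabs b1 <= S by rewrite /S; lra.
have S2 : Rabs a2 + Rabs b2 <= S by rewrite /S; lra.
split=> [|eps /HU [del [del_gt0 Hdel]]].
  by exists M; split=> // x y Hx Hy; apply: HM; apply: in_square.
exists (del / (S + 1)); split=> [|x y x' y' Hx Hy Hx' Hy' Hxx Hyy].
  by apply: Rdiv_lt_0_compat; lra.
have step a b : Rabs a + Rabs b <= S ->
    Rabs ((a * x + b * y) - (a * x' + b * y')) < del.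
  move=> abS; apply: Rle_lt_trans (Rabs_affine_sub_le a b Hxx Hyy) _.
  have : del = (S + 1) * (del / (S + 1)) by field; lra.
  have : 0 < del / (S + 1) by apply: Rdiv_lt_0_compat; lra.
  nra.
by apply: Hdel; try apply: in_square; try apply: step.
Qed.

Lemma ccont2_affine f a b c : ccont f -> ccont2 (fun x y => f (a * x + b * y + c)).
Proof.
move=> fc K K_ge0.
set K' := (Rabs a + Rabs b) * K + Rabs c.
have in_range x y : Rabs x <= K -> Rabs y <= K -> -K' <= a * x + b * y + c <= K'.
  move=> Hx Hy; have := Rabs_affine_le a b Hx Hy; have := Rabs_pos c.
  have := Rabs_triang (a * x + b * y) c; rewrite /K'; split_Rabs; lra.
split=> [|eps eps_gt0].
  case: (ccont_bound (-K') K' fc) => M [M_ge0 HM].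
  by exists M; split=> // x y Hx Hy; apply/HM/in_range.
case: (ccont_unif (-K') K' fc eps_gt0) => del [del_gt0 Hdel].
set S := Rabs a + Rabs b.
have S_ge0 : 0 <= S by rewrite /S; have := Rabs_pos a; have := Rabs_pos b; lra.
exists (del / (S + 1)); split=> [|x y x' y' Hx Hy Hx' Hy' Hxx Hyy].
  by apply: Rdiv_lt_0_compat; lra.
apply: Hdel; try exact: in_range.
have := Rabs_affine_sub_le a b Hxx Hyy; rewrite -/S.
have -> : a * x + b * y + c - (a * x' + b * y' + c) = (a * x + b * y) - (a * x' + b * y') by ring.
have : del = (S + 1) * (del / (S + 1)) by field; lra.
have : 0 < del / (S + 1) by apply: Rdiv_lt_0_compat; lra.
nra.
Qed.

Lemma ccont2_swap P : ccont2 P -> ccont2 (fun x y => P y x).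
Proof.
move/(ccont2_affine_comp 0 1 1 0); apply: ccont2_ext => x y.
by rewrite !Rmult_0_l !Rmult_1_l Rplus_0_l Rplus_0_r.
Qed.

Lemma ccont2_const c : ccont2 (fun _ _ => c).
Proof. exact: (ccont2_affine 0 0 0 (ccont_const c)). Qed.

Lemma ccont2_fst f : ccont f -> ccont2 (fun x _ => f x).
Proof.
move/(ccont2_affine 1 0 0); apply: ccont2_ext => x y.
by rewrite Rmult_1_l Rmult_0_l !Rplus_0_r.
Qed.

Lemma ccont2_snd f : ccont f -> ccont2 (fun _ y => f y).
Proof. by move/ccont2_fst/ccont2_swap. Qed.

Lemma ccont2_plus P Q : ccont2 P -> ccont2 Q -> ccont2 (fun x y => Cplus (P x y) (Q x y)).
Proof.
move=> Pc Qc K K_ge0.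
case: (Pc K K_ge0) => [[MP [MP_ge0 HMP]] UP]; case: (Qc K K_ge0) => [[MQ [MQ_ge0 HMQ]] UQ].
split=> [|eps eps_gt0].
  exists (MP + MQ); split=> [|x y Hx Hy]; first lra.
  by apply: Rle_trans (Cmod_triangle _ _) _; have := HMP x y Hx Hy; have := HMQ x y Hx Hy; lra.
case: (UP (eps / 2) ltac:(lra)) => d1 [d1_gt0 H1]; case: (UQ (eps / 2) ltac:(lra)) => d2 [d2_gt0 H2].
exists (Rmin d1 d2); split=> [|x y x' y' Hx Hy Hx' Hy' Hxx Hyy]; first exact: Rmin_pos.
have -> : Cminus (Cplus (P x y) (Q x y)) (Cplus (P x' y') (Q x' y')) =
          Cplus (Cminus (P x y) (P x' y')) (Cminus (Q x y) (Q x' y')) by rewrite /Cminus; ring.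
apply: Rle_lt_trans (Cmod_triangle _ _) _.
have := H1 x y x' y' Hx Hy Hx' Hy' (Rlt_le_trans _ _ _ Hxx (Rmin_l _ _)) (Rlt_le_trans _ _ _ Hyy (Rmin_l _ _)).
have := H2 x y x' y' Hx Hy Hx' Hy' (Rlt_le_trans _ _ _ Hxx (Rmin_r _ _)) (Rlt_le_trans _ _ _ Hyy (Rmin_r _ _)).
lra.
Qed.

Lemma ccont2_mult P Q : ccont2 P -> ccont2 Q -> ccont2 (fun x y => Cmult (P x y) (Q x y)).
Proof.
move=> Pc Qc K K_ge0.
case: (Pc K K_ge0) => [[MP [MP_ge0 HMP]] UP]; case: (Qc K K_ge0) => [[MQ [MQ_ge0 HMQ]] UQ].
split=> [|eps eps_gt0].
  exists (MP * MQ); split=> [|x y Hx Hy]; first nra.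
  by rewrite Cmod_mult; apply: Rmult_le_compat; try apply: Cmod_ge_0; [apply: HMP | apply: HMQ].
set e1 := eps / (2 * (MQ + 1)); set e2 := eps / (2 * (MP + 1)).
have e1_gt0 : 0 < e1 by apply: Rdiv_lt_0_compat; lra.
have e2_gt0 : 0 < e2 by apply: Rdiv_lt_0_compat; lra.
have E1 : e1 * (MQ + 1) = eps / 2 by rewrite /e1; field; lra.
have E2 : e2 * (MP + 1) = eps / 2 by rewrite /e2; field; lra.
case: (UP _ e1_gt0) => d1 [d1_gt0 H1]; case: (UQ _ e2_gt0) => d2 [d2_gt0 H2].
exists (Rmin d1 d2); split=> [|x y x' y' Hx Hy Hx' Hy' Hxx Hyy]; first exact: Rmin_pos.
have -> : Cminus (Cmult (P x y) (Q x y)) (Cmult (P x' y') (Q x' y')) =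
          Cplus (Cmult (Cminus (P x y) (P x' y')) (Q x y))
                (Cmult (P x' y') (Cminus (Q x y) (Q x' y'))) by rewrite /Cminus; ring.
apply: Rle_lt_trans (Cmod_triangle _ _) _; rewrite !Cmod_mult.
have A1 := H1 x y x' y' Hx Hy Hx' Hy' (Rlt_le_trans _ _ _ Hxx (Rmin_l _ _)) (Rlt_le_trans _ _ _ Hyy (Rmin_l _ _)).
have A2 := H2 x y x' y' Hx Hy Hx' Hy' (Rlt_le_trans _ _ _ Hxx (Rmin_r _ _)) (Rlt_le_trans _ _ _ Hyy (Rmin_r _ _)).
have B1 := HMQ x y Hx Hy; have B2 := HMP x' y' Hx' Hy'.
have := Cmod_ge_0 (Q x y); have := Cmod_ge_0 (P x' y').
have := Cmod_ge_0 (Cminus (P x y) (P x' y')); have := Cmod_ge_0 (Cminus (Q x y) (Q x' y')).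
nra.
Qed.

Lemma ccont2_csum n (P : 'I_n -> R -> R -> C) :
  (forall k, ccont2 (P k)) -> ccont2 (fun x y => csum n (fun k => P k x y)).
Proof.
move=> Pc; rewrite /csum; elim: (index_enum _) => [|k r IH].
  by apply: (ccont2_ext (P := fun _ _ => RtoC 0)) => [x y|]; rewrite ?big_nil //; apply: ccont2_const.
apply: (ccont2_ext (P := fun x y => Cplus (P k x y) (\big[Cplus/RtoC 0]_(j <- r) P j x y))).
  by move=> x y; rewrite big_cons.
exact: ccont2_plus.
Qed.

Lemma ccont2_partial1 P y0 : ccont2 P -> ccont (fun x => P x y0).
Proof.
move=> Pc; apply: ccont_of_eps => x0 eps eps_gt0.
have K1 := Rmax_l (Rabs x0 + 1) (Rabs y0); have K2 := Rmax_r (Rabs x0 + 1) (Rabs y0).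
set K := Rmax (Rabs x0 + 1) (Rabs y0) in K1 K2 *.
case: (Pc K ltac:(have := Rabs_pos y0; lra)) => _ /(_ eps eps_gt0) [del [del_gt0 Hdel]].
exists (Rmin del 1); split=> [|y Hy]; first by apply: Rmin_pos; lra.
have Hy1 : Rabs (y - x0) < 1 by apply: Rlt_le_trans Hy (Rmin_r _ _).
apply: Hdel => //; try lra.
- by move: Hy1 K1; split_Rabs; lra.
- exact: Rlt_le_trans Hy (Rmin_l _ _).
- by rewrite Rminus_eq_0 Rabs_R0.
Qed.

Lemma ccont2_partial2 P x0 : ccont2 P -> ccont (fun y => P x0 y).
Proof. by move/ccont2_swap/(ccont2_partial1 x0). Qed.

Lemma ccont2_cex P x a b : ccont2 P -> cex (fun u => P x u) a b.
Proof. by move=> Pc; apply/ccont_cex/ccont2_partial2. Qed.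

Lemma cint_param_sub P x x0 a a0 b b0 : ccont2 P ->
  Cminus (cint (P x) a b) (cint (P x0) a0 b0) =
  Cplus (cint (P x) a a0)
        (Cplus (cint (fun u => Cminus (P x u) (P x0 u)) a0 b0) (cint (P x) b0 b)).
Proof.
move=> Pc; rewrite cint_minus; try exact: ccont2_cex.
rewrite -(cint_chasles (f := P x) (b := a0)); try exact: ccont2_cex.
rewrite -(cint_chasles (f := P x) (a := a0) (b := b0)); try exact: ccont2_cex.
by rewrite /Cminus; ring.
Qed.

Lemma Rabs_affine1_le a b x X : Rabs x <= X -> Rabs (a * x + b) <= Rabs a * X + Rabs b.
Proof.
move=> xX; apply: Rle_trans (Rabs_triang _ _) _; rewrite Rabs_mult.
by have := Rabs_pos a; have := Rabs_pos x; nra.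
Qed.

Lemma cint_affine_ends_le f a b p q M : cex f (a * p + b) (a * q + b) ->
  (forall u, Rmin (a * p + b) (a * q + b) <= u <= Rmax (a * p + b) (a * q + b) -> Cmod (f u) <= M) ->
  Cmod (cint f (a * p + b) (a * q + b)) <= Rabs a * Rabs (q - p) * M.
Proof.
move=> fi fM; have -> : Rabs a * Rabs (q - p) = Rabs ((a * q + b) - (a * p + b)).
  by rewrite -Rabs_mult; congr Rabs; ring.
exact: cint_bound.
Qed.

Lemma ccont_cint_param P a1 b1 a2 b2 : ccont2 P ->
  ccont (fun x => cint (fun u => P x u) (a1 * x + b1) (a2 * x + b2)).
Proof.
move=> Pc; apply: ccont_of_eps => x0 eps eps_gt0.
set X := Rabs x0 + 1; set K := (1 + Rabs a1 + Rabs a2) * X + Rabs b1 + Rabs b2.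
have := Rabs_pos a1; have := Rabs_pos a2; have := Rabs_pos b1; have := Rabs_pos b2 => ? ? ? ?.
have x0X : Rabs x0 <= X by rewrite /X; lra.
have X_ge0 : 0 <= X by apply: Rle_trans x0X; apply: Rabs_pos.
have in_box x : Rabs x <= X -> [/\ Rabs x <= K, Rabs (a1 * x + b1) <= K & Rabs (a2 * x + b2) <= K].
  by move=> xX; have := Rabs_affine1_le a1 b1 xX; have := Rabs_affine1_le a2 b2 xX; rewrite /K; split; nra.
case: (in_box x0 x0X) => x0K A0K B0K.
case: (Pc K ltac:(rewrite /K; nra)) => [[M [M_ge0 HM]] HU].
set L := Rabs ((a2 * x0 + b2) - (a1 * x0 + b1)); have L_ge0 : 0 <= L by apply: Rabs_pos.
set e := eps / (3 * (L + 1)); have e_gt0 : 0 < e by apply: Rdiv_lt_0_compat; lra.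
case: (HU e e_gt0) => del [del_gt0 Hdel].
set S := (M + 1) * (Rabs a1 + Rabs a2 + 1); have S_gt0 : 0 < S by rewrite /S; nra.
exists (Rmin (Rmin del 1) (eps / (3 * S))); split.
  by apply: Rmin_pos; [apply: Rmin_pos | apply: Rdiv_lt_0_compat]; lra.
move=> x Hx; rewrite cint_param_sub //.
have [Hxd Hx1 Hxe] : [/\ Rabs (x - x0) < del, Rabs (x - x0) < 1 & Rabs (x - x0) < eps / (3 * S)].
  by move: Hx; have := Rmin_l (Rmin del 1) (eps / (3 * S)); have := Rmin_r (Rmin del 1) (eps / (3 * S));
     have := Rmin_l del 1; have := Rmin_r del 1; split; lra.
case: (in_box x ltac:(have := Rabs_triang_inv x x0; rewrite /X; lra)) => xK AK BK.
have T1 : Cmod (cint (P x) (a1 * x + b1) (a1 * x0 + b1)) <= Rabs a1 * Rabs (x - x0) * M.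
  rewrite (Rabs_minus_sym x x0); apply: cint_affine_ends_le => [|u Hu]; first exact: ccont2_cex.
  exact/HM/(Rabs_between_le AK A0K).
have T3 : Cmod (cint (P x) (a2 * x0 + b2) (a2 * x + b2)) <= Rabs a2 * Rabs (x - x0) * M.
  apply: cint_affine_ends_le => [|u Hu]; first exact: ccont2_cex.
  exact/HM/(Rabs_between_le B0K BK).
have T2 : Cmod (cint (fun u => Cminus (P x u) (P x0 u)) (a1 * x0 + b1) (a2 * x0 + b2)) <= L * e.
  apply: cint_bound => [|u /(Rabs_between_le A0K B0K) uK].
    by apply/ccont_cex/ccont_minus; apply: ccont2_partial2.
  by apply/Rlt_le/Hdel => //; rewrite ?Rminus_eq_0 ?Rabs_R0.
have Le : L * e < eps / 3.
  have : e * (L + 1) = eps / 3 by rewrite /e; field; lra.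
  nra.
have Sd : S * Rabs (x - x0) < eps / 3.
  have <- : S * (eps / (3 * S)) = eps / 3 by field; lra.
  exact: Rmult_lt_compat_l.
have : (Rabs a1 + Rabs a2) * Rabs (x - x0) * M <= S * Rabs (x - x0).
  by have := Rabs_pos (x - x0); rewrite /S; nra.
by have := Cmod_add3_le (cint (P x) (a1 * x + b1) (a1 * x0 + b1))
  (cint (fun u => Cminus (P x u) (P x0 u)) (a1 * x0 + b1) (a2 * x0 + b2))
  (cint (P x) (a2 * x0 + b2) (a2 * x + b2)); lra.
Qed.

(** * Iterated integrals and convolutions *)

Section TriangleIntegral.
Variable Q : R -> R -> C.
Hypothesis Qc : ccont2 Q.

Let inner y s := cint (fun u => Q u s) s y.
Let triangle y := cint (inner y) 0 y.

Lemma ccont_cint_diag : ccont (fun s => cint (Q s) 0 s).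
Proof.
have := ccont_cint_param 0 0 1 0 Qc; apply: ccont_ext => s.
by rewrite Rmult_0_l Rmult_1_l !Rplus_0_r.
Qed.

Lemma ccont_cint_inner y : ccont (inner y).
Proof.
have := ccont_cint_param 1 0 0 y (ccont2_swap Qc); apply: ccont_ext => s.
by rewrite /inner Rmult_1_l Rmult_0_l Rplus_0_l Rplus_0_r.
Qed.

Lemma cint_inner_sub y t0 s :
  cint (fun u => Cminus (Q u s) (Q t0 s)) t0 y =
  Cminus (Cminus (inner y s) (inner t0 s)) (Cmult (RtoC (y - t0)) (Q t0 s)).
Proof.
have Qs a b : cex (fun u => Q u s) a b by apply/ccont_cex/ccont2_partial1.
rewrite cint_minus ?cint_const //; last exact/ccont_cex/ccont_const.
by rewrite /inner -(cint_chasles (Qs s t0) (Qs t0 y)) /Cminus; ring.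
Qed.

Lemma triangle_increment y t0 :
  Cminus (Cminus (triangle y) (triangle t0)) (Cmult (RtoC (y - t0)) (cint (Q t0) 0 t0)) =
  Cplus (cint (inner y) t0 y) (cint (fun s => cint (fun u => Cminus (Q u s) (Q t0 s)) t0 y) 0 t0).
Proof.
have inner_ex z a b : cex (inner z) a b by apply/ccont_cex/ccont_cint_inner.
have Qt0 : ccont (Q t0) := ccont2_partial2 t0 Qc.
rewrite (cint_ext (f := fun s => cint (fun u => Cminus (Q u s) (Q t0 s)) t0 y)
                  (g := fun s => Cminus (Cminus (inner y s) (inner t0 s))
                                       (Cmult (RtoC (y - t0)) (Q t0 s)))); last first.
  by move=> s _; apply: cint_inner_sub.
rewrite /triangle -(cint_chasles (inner_ex y 0 t0) (inner_ex y t0 y)).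
rewrite cint_minus ?cint_minus ?cint_cmul //; try exact: ccont_cex.
- by rewrite /Cminus; ring.
- by apply/ccont_cex/ccont_minus; apply: ccont_cint_inner.
- exact/ccont_cex/ccont_cmul.
Qed.

Lemma triangle_tail_le y t0 M : 0 <= M -> Rabs (y - t0) < 1 ->
  (forall u s, Rabs (u - t0) <= 1 -> Rabs (s - t0) <= 1 -> Cmod (Q u s) <= M) ->
  Cmod (cint (inner y) t0 y) <= Rabs (y - t0) * (Rabs (y - t0) * M).
Proof.
move=> M_ge0 yt0 HM; apply: cint_bound => [|s Hs]; first exact/ccont_cex/ccont_cint_inner.
have ys : Rabs (y - s) <= Rabs (y - t0) /\ Rabs (s - t0) <= 1.
  by move: Hs; rewrite /Rmin /Rmax; case: Rle_dec => _; split_Rabs; lra.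
apply: Rle_trans (cint_bound (M := M) _ _) _.
- exact/ccont_cex/ccont2_partial1.
- move=> u Hu; apply: HM; last by case: ys.
  by move: Hu yt0 ys; rewrite /Rmin /Rmax; case: Rle_dec => _; split_Rabs; lra.
- by apply: Rmult_le_compat_r => //; case: ys.
Qed.

Lemma triangle_body_le y t0 e :
  (forall u s, Rmin 0 t0 <= s <= Rmax 0 t0 -> Rmin t0 y <= u <= Rmax t0 y ->
     Cmod (Cminus (Q u s) (Q t0 s)) <= e) ->
  Cmod (cint (fun s => cint (fun u => Cminus (Q u s) (Q t0 s)) t0 y) 0 t0)
    <= Rabs t0 * (Rabs (y - t0) * e).
Proof.
move=> He; rewrite -[Rabs t0]Rabs_Ropp -[- t0]Rminus_0_l Rabs_minus_sym.
apply: cint_bound => [|s Hs].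
  apply: ccont_cex; apply: (ccont_ext (fun s => esym (cint_inner_sub y t0 s))).
  apply: ccont_minus; first by apply: ccont_minus; apply: ccont_cint_inner.
  exact/ccont_cmul/ccont2_partial2.
apply: cint_bound => [|u Hu]; last exact: He.
by apply/ccont_cex/ccont_minus; [apply: ccont2_partial1 | apply: ccont_const].
Qed.

Lemma cderiv_triangle t0 : cderiv triangle t0 (cint (Q t0) 0 t0).
Proof.
apply: cderiv_of_eps => eps eps_gt0.
set T := Rabs t0 + 1; have T_gt0 : 0 < T by rewrite /T; have := Rabs_pos t0; lra.
case: (@Qc (2 * T) ltac:(lra)) => [[M [M_ge0 HM]] HU].
set e := eps / (2 * T); have e_gt0 : 0 < e by apply: Rdiv_lt_0_compat; lra.
case: (HU e e_gt0) => del [del_gt0 Hdel].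
exists (Rmin (Rmin del 1) (eps / (2 * (M + 1)))); split.
  by apply: Rmin_pos; [apply: Rmin_pos | apply: Rdiv_lt_0_compat]; lra.
move=> y Hy; rewrite triangle_increment.
have Hy1 : Rabs (y - t0) < 1 by apply: Rlt_le_trans Hy _; apply: Rle_trans (Rmin_l _ _) (Rmin_r _ _).
have Hyd : Rabs (y - t0) < del by apply: Rlt_le_trans Hy _; apply: Rle_trans (Rmin_l _ _) (Rmin_l _ _).
have Hye : Rabs (y - t0) < eps / (2 * (M + 1)) by apply: Rlt_le_trans Hy (Rmin_r _ _).
have near z : Rabs (z - t0) <= 1 -> Rabs z <= 2 * T by rewrite /T; split_Rabs; lra.
have B1 := triangle_tail_le M_ge0 Hy1 (fun u s Hu Hs => HM u s (near u Hu) (near s Hs)).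
have B2 : Cmod (cint (fun s => cint (fun u => Cminus (Q u s) (Q t0 s)) t0 y) 0 t0)
          <= Rabs t0 * (Rabs (y - t0) * e).
  apply: triangle_body_le => u s Hs Hu.
  have [Hs' Hu'] : Rabs s <= Rabs t0 /\ Rabs (u - t0) <= Rabs (y - t0).
    by move: Hs Hu; rewrite /Rmin /Rmax; do 2!case: Rle_dec => _; split_Rabs; lra.
  have sT : Rabs s <= 2 * T by rewrite /T; have := Rabs_pos t0; lra.
  have t0T : Rabs t0 <= 2 * T by rewrite /T; have := Rabs_pos t0; lra.
  by apply/Rlt_le/Hdel => //; rewrite ?Rminus_eq_0 ?Rabs_R0; try apply: near; lra.
have yt0 := Rabs_pos (y - t0); have t00 := Rabs_pos t0.
have C1 : Rabs (y - t0) * M <= eps / 2.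
  have <- : eps / (2 * (M + 1)) * (M + 1) = eps / 2 by field; lra.
  by apply: Rle_trans (_ : Rabs (y - t0) * M <= Rabs (y - t0) * (M + 1)) _; nra.
have C2 : Rabs t0 * e <= eps / 2.
  have : e * T = eps / 2 by rewrite /e; field; lra.
  by rewrite /T; nra.
have B1' : Rabs (y - t0) * (Rabs (y - t0) * M) <= Rabs (y - t0) * (eps / 2) by apply: Rmult_le_compat_l.
have B2' : Rabs t0 * (Rabs (y - t0) * e) <= Rabs (y - t0) * (eps / 2).
  by rewrite Rmult_comm Rmult_assoc; apply: Rmult_le_compat_l => //; rewrite Rmult_comm.
apply: Rle_trans (Cmod_triangle _ _) _; lra.
Qed.

(* Both sides vanish at 0 and have derivative int_0^t Q t s ds at t. *)
Lemma cint_triangle_swap t :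
  cint (fun s => cint (fun u => Q u s) s t) 0 t = cint (fun s => cint (Q s) 0 s) 0 t.
Proof.
set RH := fun y => cint (fun s => cint (Q s) 0 s) 0 y.
have D y : cderiv (fun z => Cminus (triangle z) (RH z)) y (RtoC 0).
  rewrite -(Cminus_diag (cint (Q y) 0 y)).
  exact: cderiv_minus (cderiv_triangle y) (cderiv_cint 0 y ccont_cint_diag).
have := cderiv0_eq t D; rewrite /triangle /RH !cint_point Cminus_diag.
exact: Cminus_eq0.
Qed.

End TriangleIntegral.

(* Fubini on the triangle 0 <= s, 0 <= tau, s + tau <= t, in the form needed for convolutions. *)
Lemma cint_conv_swap P t : ccont2 P ->
  cint (fun s => cint (fun tau => P tau s) 0 (t - s)) 0 t =
  cint (fun s => cint (fun sg => P (s - sg) sg) 0 s) 0 t.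
Proof.
move=> Pc; set Q := fun u sg => P (u - sg) sg.
have Qc : ccont2 Q.
  have := ccont2_affine_comp 1 (-1) 0 1 Pc; apply: ccont2_ext => x y.
  by rewrite /Q; congr P; ring.
rewrite -(cint_triangle_swap Qc); apply: cint_ext => s _.
have E := RInt_comp_lin (V := C_R_CompleteNormedModule) (fun tau => P tau s) 1 (- s) s t.
have E0 : 1 * s + - s = 0 by ring.
have Et : 1 * t + - s = t - s by ring.
rewrite E0 Et in E; rewrite /cint -E.
  apply: (RInt_ext (V := C_R_CompleteNormedModule)) => u _.
  by rewrite scal_one /Q; congr P; ring.
exact/ccont_cex/ccont2_partial1.
Qed.

Definition mcont d (u : R -> Mat d) := forall i j, ccont (fun t => u t i j).
Definition opcont d (K : R -> Mat d -> Mat d) := forall x, mcont (fun t => K t x).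
Definition linfam d (K : R -> Mat d -> Mat d) := forall t, is_linear_map (K t).
Definition mconv d (K : R -> Mat d -> Mat d) (u : R -> Mat d) (t : R) : Mat d :=
  mint (fun s => K (t - s) (u s)) 0 t.

Lemma mcont_mex d (u : R -> Mat d) a b : mcont u -> mex u a b.
Proof. by move=> uc i j; apply: ccont_cex. Qed.

Lemma mcont_add d (u v : R -> Mat d) : mcont u -> mcont v -> mcont (fun t => madd (u t) (v t)).
Proof. by move=> uc vc i j; apply: ccont_plus. Qed.

Lemma mcont_sub d (u v : R -> Mat d) : mcont u -> mcont v -> mcont (fun t => msub (u t) (v t)).
Proof. by move=> uc vc i j; apply: ccont_minus. Qed.

Lemma mcont_scale d c (u : R -> Mat d) : mcont u -> mcont (fun t => mscale c (u t)).
Proof. by move=> uc i j; apply: ccont_cmul. Qed.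

Lemma mcont_const d (x : Mat d) : mcont (fun _ => x).
Proof. by move=> i j; apply: ccont_const. Qed.

Lemma mcont_mmul d (u v : R -> Mat d) : mcont u -> mcont v -> mcont (fun t => mmul (u t) (v t)).
Proof. by move=> uc vc i j; apply: ccont_csum => k; apply: ccont_mult. Qed.

Lemma opcont_sub d (K : R -> Mat d -> Mat d) c : opcont K -> opcont (fun t => K (c - t)).
Proof.
move=> Kc x i j; have := ccont2_affine (-1) 0 c (Kc x i j).
by move/(ccont2_partial1 0); apply: ccont_ext => t; congr K; ring.
Qed.

Section LinearFamily.
Variables (d : nat) (K : R -> Mat d -> Mat d).
Hypotheses (K_lin : linfam K) (Kc : opcont K).

Lemma ccont2_linfam_app (V : R -> R -> Mat d) a b c i j :
  (forall k l, ccont2 (fun x y => V x y k l)) ->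
  ccont2 (fun x y => K (a * x + b * y + c) (V x y) i j).
Proof.
move=> Vc; apply: (ccont2_ext (P := fun x y => csum d (fun k => csum d (fun l =>
          Cmult (V x y k l) (K (a * x + b * y + c) (munit k l) i j))))).
  by move=> x y; rewrite [RHS](linear_map_entry (K_lin _)).
apply: ccont2_csum => k; apply: ccont2_csum => l.
exact/ccont2_mult/(ccont2_affine a b c (Kc (munit k l) i j)).
Qed.

Lemma ccont2_linfam_app_snd (u : R -> Mat d) i j :
  mcont u -> ccont2 (fun tau s => K tau (u s) i j).
Proof.
move=> uc; have := ccont2_linfam_app 1 0 0 i j (fun k l => ccont2_snd (uc k l)).
by apply: ccont2_ext => x y; rewrite Rmult_1_l Rmult_0_l !Rplus_0_r.
Qed.

Lemma mcont_app (u : R -> Mat d) : mcont u -> mcont (fun t => K t (u t)).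
Proof.
move=> uc i j; have := ccont2_partial1 0 (ccont2_linfam_app 1 0 0 i j (fun k l => ccont2_fst (uc k l))).
by apply: ccont_ext => t; rewrite Rmult_1_l Rmult_0_l !Rplus_0_r.
Qed.

Lemma mcont_conv (u : R -> Mat d) : mcont u -> mcont (mconv K u).
Proof.
move=> uc i j.
have := ccont_cint_param 0 0 1 0 (ccont2_linfam_app 1 (-1) 0 i j (fun k l => ccont2_snd (uc k l))).
apply: ccont_ext => t; rewrite Rmult_0_l Rmult_1_l !Rplus_0_r.
by apply: cint_ext => s _; congr K; ring.
Qed.

Lemma mex_conv_integrand (u : R -> Mat d) t a b :
  mcont u -> mex (fun s => K (t - s) (u s)) a b.
Proof.
move=> uc i j; apply: ccont_cex.
have := ccont2_partial2 t (ccont2_linfam_app 1 (-1) 0 i j (fun k l => ccont2_snd (uc k l))).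
by apply: ccont_ext => s; congr K; ring.
Qed.

Lemma mconv_addr (u v : R -> Mat d) t : mcont u -> mcont v ->
  mconv K (fun s => madd (u s) (v s)) t = madd (mconv K u t) (mconv K v t).
Proof.
move=> uc vc; rewrite /mconv -mint_add; try exact: mex_conv_integrand.
by apply: mat_ext => i j; apply: cint_ext => s _; rewrite (proj1 (K_lin _)).
Qed.

Lemma mconv_subr (u v : R -> Mat d) t : mcont u -> mcont v ->
  mconv K (fun s => msub (u s) (v s)) t = msub (mconv K u t) (mconv K v t).
Proof.
move=> uc vc; apply: mat_ext => i j; rewrite /mconv /mint /msub -cint_minus;
  try exact: mex_conv_integrand.
by apply: cint_ext => s _; rewrite (linear_map_msub (K_lin _)).
Qed.

Lemma mconv_linear (M : R -> Mat d -> Mat d) t :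
  linfam M -> opcont M -> is_linear_map (fun x => mconv K (fun r => M r x) t).
Proof.
move=> M_lin Mc; split=> [x y|c x].
  rewrite /mconv -mint_add; try by apply: mex_conv_integrand; apply: Mc.
  by apply: mat_ext => i j; apply: cint_ext => s _; rewrite (proj1 (M_lin s)) (proj1 (K_lin _)).
rewrite /mconv -mint_scale; last by apply: mex_conv_integrand; apply: Mc.
by apply: mat_ext => i j; apply: cint_ext => s _; rewrite (proj2 (M_lin s)) (proj2 (K_lin _)).
Qed.

End LinearFamily.

(** * Closure properties of complete positivity *)

Definition qform d n (v : 'I_n -> 'I_d -> C) (X : 'I_n -> 'I_n -> Mat d) : C :=
  csum n (fun i => csum n (fun j => csum d (fun k => csum d (fun l =>
     Cmult (Cmult (Cconj (v i k)) (X i j k l)) (v j l))))).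

Lemma psd_blockP d n X :
  psd_block d n X <-> forall v, Im (qform v X) = 0 /\ 0 <= Re (qform v X).
Proof. by []. Qed.

Lemma qform_add d n v (X Y : 'I_n -> 'I_n -> Mat d) :
  qform v (fun i j => madd (X i j) (Y i j)) = Cplus (qform v X) (qform v Y).
Proof.
rewrite /qform -csum_plus; apply: csum_ext => i; rewrite -csum_plus; apply: csum_ext => j.
rewrite -csum_plus; apply: csum_ext => k; rewrite -csum_plus; apply: csum_ext => l.
by rewrite /madd; ring.
Qed.

Lemma CP_comp d (P Q : Mat d -> Mat d) : CP P -> CP Q -> CP (fun x => P (Q x)).
Proof.
move=> [[Pa Ps] HP] [[Qa Qs] HQ]; split; last by move=> n X /HQ /HP.
by split=> [a b|c a]; rewrite ?Qa ?Pa ?Qs ?Ps.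
Qed.

Lemma CP_add d (P Q : Mat d -> Mat d) : CP P -> CP Q -> CP (fun x => madd (P x) (Q x)).
Proof.
move=> [P_lin HP] [Q_lin HQ]; split; first exact: madd_linear.
move=> n X X_psd; apply/psd_blockP => v; rewrite /ampl qform_add.
have [P1 P2] := proj1 (psd_blockP _) (HP n X X_psd) v.
have [Q1 Q2] := proj1 (psd_blockP _) (HQ n X X_psd) v.
by move: P1 P2 Q1 Q2; rewrite /ampl /Cplus /Re /Im /=; split; lra.
Qed.

Section IntegralOfCP.
Variables (d : nat) (Phi : R -> Mat d -> Mat d) (t : R).
Hypotheses (t_ge0 : 0 <= t) (Phi_CP : forall s, 0 <= s <= t -> CP (Phi s)).
Hypothesis Phi_cont : forall x, mcont (fun s => Phi s x).

Let in_range s : Rmin 0 t < s < Rmax 0 t -> 0 <= s <= t.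
Proof. by rewrite /Rmin /Rmax; case: Rle_dec => _; lra. Qed.

Lemma mint_linear : is_linear_map (fun x => mint (fun s => Phi s x) 0 t).
Proof.
split=> [a b|c a].
  rewrite -mint_add; try exact: mcont_mex.
  apply: mat_ext => i j; apply: cint_ext => s /in_range/Phi_CP [[Ha _] _].
  by rewrite Ha.
rewrite -mint_scale; last exact: mcont_mex.
apply: mat_ext => i j; apply: cint_ext => s /in_range/Phi_CP [[_ Hs] _].
by rewrite Hs.
Qed.

Lemma qform_mint n v (X : 'I_n -> 'I_n -> Mat d) :
  qform v (ampl n (fun x => mint (fun s => Phi s x) 0 t) X) =
  cint (fun s => qform v (ampl n (Phi s) X)) 0 t.
Proof.
have ex i j k l : cex (fun s => Cmult (Cmult (Cconj (v i k)) (Phi s (X i j) k l)) (v j l)) 0 t.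
  by apply/ccont_cex/ccont_mult; [apply/ccont_cmul/Phi_cont | apply: ccont_const].
rewrite /qform /ampl /mint cint_csum => [|i]; last by do 3!apply: cex_csum => ?.
apply: csum_ext => i; rewrite cint_csum => [|j]; last by do 2!apply: cex_csum => ?.
apply: csum_ext => j; rewrite cint_csum => [|k]; last by apply: cex_csum => ?.
apply: csum_ext => k; rewrite cint_csum //; apply: csum_ext => l.
rewrite (cint_ext (f := fun s => Cmult (Cmult (Cconj (v i k)) (Phi s (X i j) k l)) (v j l))
                  (g := fun s => Cmult (Cmult (Cconj (v i k)) (v j l)) (Phi s (X i j) k l))).
  by rewrite cint_cmul; [ring | apply/ccont_cex/Phi_cont].
by move=> s _; ring.
Qed.

Lemma CP_mint : CP (fun x => mint (fun s => Phi s x) 0 t).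
Proof.
split; first exact: mint_linear.
move=> n X X_psd; apply/psd_blockP => v; rewrite qform_mint.
have ex : cex (fun s => qform v (ampl n (Phi s) X)) 0 t.
  apply: ccont_cex; do 4!apply: ccont_csum => ?.
  by apply: ccont_mult; [apply/ccont_cmul/Phi_cont | apply: ccont_const].
split.
- rewrite im_cint // (RInt_ext _ (fun _ => 0)) ?RInt_const; first by rewrite /scal /= /mult /=; ring.
  by move=> s /in_range/Phi_CP [_ /(_ n X X_psd v) []].
- rewrite re_cint //; apply: RInt_ge_0 => //; first exact: (ex_RInt_fct_extend_fst _ _ _ ex).
  by move=> s Hs; have [_ /(_ n X X_psd v) []] := Phi_CP (conj (Rlt_le _ _ (proj1 Hs)) (Rlt_le _ _ (proj2 Hs))).
Qed.

End IntegralOfCP.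

Definition clim (u : nat -> C) (l : C) :=
  is_lim_seq (fun n => Re (u n)) (Re l) /\ is_lim_seq (fun n => Im (u n)) (Im l).

Lemma clim_ext u v a : (forall n, u n = v n) -> clim u a -> clim v a.
Proof.
by move=> uv [H1 H2]; split; [apply: is_lim_seq_ext H1 | apply: is_lim_seq_ext H2] => n; rewrite uv.
Qed.

Lemma clim_const c : clim (fun _ => c) c.
Proof. by split; apply: is_lim_seq_const. Qed.

Lemma clim_plus u v a b : clim u a -> clim v b -> clim (fun n => Cplus (u n) (v n)) (Cplus a b).
Proof. by move=> [H1 H2] [H3 H4]; split; apply: is_lim_seq_plus'. Qed.

Lemma clim_cmul c u a : clim u a -> clim (fun n => Cmult c (u n)) (Cmult c a).
Proof.
move=> [H1 H2]; split.
- rewrite re_mult; apply: (is_lim_seq_ext (fun n => Re c * Re (u n) - Im c * Im (u n))).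
    by move=> n; rewrite re_mult.
  exact: is_lim_seq_minus' (is_lim_seq_scal_l _ (Re c) _ H1) (is_lim_seq_scal_l _ (Im c) _ H2).
- rewrite im_mult; apply: (is_lim_seq_ext (fun n => Re c * Im (u n) + Im c * Re (u n))).
    by move=> n; rewrite im_mult.
  exact: is_lim_seq_plus' (is_lim_seq_scal_l _ (Re c) _ H2) (is_lim_seq_scal_l _ (Im c) _ H1).
Qed.

Lemma clim_unique u a b : clim u a -> clim u b -> a = b.
Proof.
move=> [/is_lim_seq_unique Ra /is_lim_seq_unique Ia] [/is_lim_seq_unique Rb /is_lim_seq_unique Ib].
move: Ra Rb Ia Ib; case: a b => [a1 a2] [b1 b2] -> [->] -> [->] //.
Qed.

Lemma clim_csum m (u : nat -> 'I_m -> C) (l : 'I_m -> C) :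
  (forall k, clim (fun n => u n k) (l k)) -> clim (fun n => csum m (u n)) (csum m l).
Proof.
move=> ul; rewrite /csum; elim: (index_enum _) => [|k r IH].
  by rewrite big_nil; apply: (clim_ext (u := fun _ => RtoC 0)) => [n|]; rewrite ?big_nil //; apply: clim_const.
rewrite big_cons; apply: (clim_ext (u := fun n => Cplus (u n k) (\big[Cplus/RtoC 0]_(j <- r) u n j))).
  by move=> n; rewrite big_cons.
exact: clim_plus.
Qed.

Lemma clim_zero_of_bound (z : nat -> C) (b : nat -> R) :
  is_lim_seq b 0 -> (forall n, Cmod (z n) <= b n) -> clim z (RtoC 0).
Proof.
move=> b0 zb; have nb0 : is_lim_seq (fun n => - b n) 0.
  by have := proj1 (is_lim_seq_opp _ _) b0; rewrite /= Ropp_0.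
split=> /=; apply: (is_lim_seq_le_le (fun n => - b n) _ b) => // n.
- by have := zb n; have := re_le_Cmod (z n); rewrite /Re; split_Rabs; lra.
- by have := zb n; have := im_le_Cmod (z n); rewrite /Im; split_Rabs; lra.
Qed.

Section LimitOfCP.
Variables (d : nat) (Phin : nat -> Mat d -> Mat d) (Phi : Mat d -> Mat d).
Hypotheses (Phin_CP : forall n, CP (Phin n)).
Hypothesis Phin_lim : forall x i j, clim (fun n => Phin n x i j) (Phi x i j).

Lemma lim_linear : is_linear_map Phi.
Proof.
split=> [a b|c a]; apply: mat_ext => i j; apply: clim_unique (Phin_lim _ i j) _.
- apply: (clim_ext (u := fun n => Cplus (Phin n a i j) (Phin n b i j))); last exact: clim_plus.
  by move=> n; case: (Phin_CP n) => [[-> _] _].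
- apply: (clim_ext (u := fun n => Cmult c (Phin n a i j))); last exact: clim_cmul.
  by move=> n; case: (Phin_CP n) => [[_ ->] _].
Qed.

Lemma CP_lim : CP Phi.
Proof.
split; first exact: lim_linear.
move=> n X X_psd; apply/psd_blockP => v.
have psd m := proj1 (psd_blockP _) (proj2 (Phin_CP m) n X X_psd) v.
have [Hre Him] : clim (fun m => qform v (ampl n (Phin m) X)) (qform v (ampl n Phi X)).
  rewrite /qform /ampl; apply: clim_csum => i; apply: clim_csum => j.
  apply: clim_csum => k; apply: clim_csum => l.
  have -> : Cmult (Cmult (Cconj (v i k)) (Phi (X i j) k l)) (v j l) =
            Cmult (Cmult (Cconj (v i k)) (v j l)) (Phi (X i j) k l) by ring.
  apply: (clim_ext (u := fun m => Cmult (Cmult (Cconj (v i k)) (v j l)) (Phin m (X i j) k l))).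
    by move=> m; ring.
  exact: clim_cmul.
split.
- have := is_lim_seq_unique _ _ Him.
  rewrite (Lim_seq_ext _ (fun _ => 0)) ?Lim_seq_const; first by case.
  by move=> m; case: (psd m).
- apply: (is_lim_seq_le (fun _ => 0) _ 0 _ _ (is_lim_seq_const 0) Hre) => m.
  by case: (psd m).
Qed.

End LimitOfCP.

(** * Factorial bounds *)

HB.instance Definition _ := Monoid.isComLaw.Build R 0 Rplus
  (fun x y z => esym (Rplus_assoc x y z)) Rplus_comm Rplus_0_l.

Definition rsum n (f : 'I_n -> R) : R := \big[Rplus/0]_(i < n) f i.

Lemma rsum_nonneg n (f : 'I_n -> R) : (forall i, 0 <= f i) -> 0 <= rsum f.
Proof. by move=> f_ge0; apply: big_ind => //; [lra | apply: Rplus_le_le_0_compat]. Qed.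

Lemma rsum_le n (f g : 'I_n -> R) : (forall i, f i <= g i) -> rsum f <= rsum g.
Proof. by move=> fg; apply: (big_ind2 Rle) => //; [lra | move=> *; apply: Rplus_le_compat]. Qed.

Lemma rsum_term n (f : 'I_n -> R) i : (forall k, 0 <= f k) -> f i <= rsum f.
Proof.
move=> f_ge0; rewrite /rsum (bigD1 i) //=.
have : 0 <= \big[Rplus/0]_(k < n | k != i) f k.
  by apply: big_ind => //; [lra | apply: Rplus_le_le_0_compat].
by move/(Rplus_le_compat_l (f i)); rewrite Rplus_0_r.
Qed.

Lemma rsum_scal n c (f : 'I_n -> R) : rsum (fun i => c * f i) = c * rsum f.
Proof. by symmetry; apply: (big_morph (Rmult c)) => [x y|]; ring. Qed.

Lemma Cmod_csum n (f : 'I_n -> C) : Cmod (csum n f) <= rsum (fun i => Cmod (f i)).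
Proof.
apply: (big_ind2 (fun z r => Cmod z <= r)); first by rewrite Cmod_0; lra.
  by move=> z1 r1 z2 r2 H1 H2; apply: Rle_trans (Cmod_triangle _ _) _; lra.
by move=> i _; lra.
Qed.

Lemma rsum_cont n (f : 'I_n -> R -> R) x :
  (forall i, continuity_pt (f i) x) -> continuity_pt (fun t => rsum (fun i => f i t)) x.
Proof.
move=> fc; rewrite /rsum; elim: (index_enum _) => [|k r IH].
  by apply: (continuity_pt_ext (fun _ => 0)) => [t|]; rewrite ?big_nil //; apply: continuity_pt_const.
apply: (continuity_pt_ext (fun t => f k t + \big[Rplus/0]_(j <- r) f j t)).
  by move=> t; rewrite big_cons.
exact: continuity_pt_plus.
Qed.

Lemma mcont_bounded d (u : R -> Mat d) a b : mcont u ->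
  exists M, 0 <= M /\ forall s, a <= s <= b -> forall i j, Cmod (u s i j) <= M.
Proof.
move=> uc; pose g s := rsum (fun i => rsum (fun j => reim (u s i j))).
have gc x : continuity_pt g x.
  by apply: (rsum_cont (f := fun i s => rsum (fun j => reim (u s i j)))) => i;
     apply: (rsum_cont (f := fun j s => reim (u s i j))) => j; apply: ccont_reim.
case: (cont_bounded a b gc) => M [M_ge0 HM]; exists M; split=> // s Hs i j.
apply: Rle_trans (Cmod_le_reim _) (Rle_trans _ _ _ _ (HM s Hs)).
apply: Rle_trans (rsum_term (f := fun j => reim (u s i j)) j (fun k => reim_ge0 _)) _.
apply: (rsum_term (f := fun i => rsum (fun j => reim (u s i j)))) => k.
by apply: rsum_nonneg => l; apply: reim_ge0.
Qed.

Definition opnorm d (Phi : Mat d -> Mat d) : R :=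
  rsum (fun i => rsum (fun j => rsum (fun k => rsum (fun l => Cmod (Phi (munit k l) i j))))).

Lemma opnorm_ge0 d (Phi : Mat d -> Mat d) : 0 <= opnorm Phi.
Proof. by do 4!apply: rsum_nonneg => ?; apply: Cmod_ge_0. Qed.

Lemma linear_map_entry_le d (Phi : Mat d -> Mat d) x beta : is_linear_map Phi -> 0 <= beta ->
  (forall k l, Cmod (x k l) <= beta) -> forall i j, Cmod (Phi x i j) <= opnorm Phi * beta.
Proof.
move=> Phi_lin beta_ge0 xb i j.
rewrite (linear_map_entry Phi_lin) Rmult_comm.
apply: Rle_trans (Cmod_csum _) _.
apply: Rle_trans (_ : _ <= rsum (fun k => rsum (fun l => beta * Cmod (Phi (munit k l) i j)))) _.
  apply: rsum_le => k; apply: Rle_trans (Cmod_csum _) _; apply: rsum_le => l.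
  by rewrite Cmod_mult; apply: Rmult_le_compat_r; [apply: Cmod_ge_0 | apply: xb].
have -> : rsum (fun k => rsum (fun l => beta * Cmod (Phi (munit k l) i j))) =
          beta * rsum (fun k => rsum (fun l => Cmod (Phi (munit k l) i j))).
  by rewrite -rsum_scal; congr rsum; apply: functional_extensionality => k; rewrite rsum_scal.
apply: Rmult_le_compat_l => //.
have nonneg i' j' : 0 <= rsum (fun k => rsum (fun l => Cmod (Phi (munit k l) i' j'))).
  by do 2!apply: rsum_nonneg => ?; apply: Cmod_ge_0.
apply: Rle_trans (rsum_term (f := fun j' => rsum (fun k => rsum (fun l => Cmod (Phi (munit k l) i j')))) j _) _.
  by move=> j'; apply: nonneg.
apply: (rsum_term (f := fun i' => rsum (fun j' => rsum (fun k => rsum (fun l => Cmod (Phi (munit k l) i' j')))))).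
by move=> i'; apply: rsum_nonneg => j'; apply: nonneg.
Qed.

Lemma opnorm_bounded d (K : R -> Mat d -> Mat d) a b : opcont K ->
  exists c, 0 <= c /\ forall tau, a <= tau <= b -> opnorm (K tau) <= c.
Proof.
move=> Kc; pose g tau := rsum (fun i => rsum (fun j => rsum (fun k => rsum (fun l =>
                                reim (K tau (munit k l) i j))))).
have gc x : continuity_pt g x.
  apply: (rsum_cont (f := fun i s => rsum (fun j => rsum (fun k => rsum (fun l => reim (K s (munit k l) i j)))))) => i.
  apply: (rsum_cont (f := fun j s => rsum (fun k => rsum (fun l => reim (K s (munit k l) i j))))) => j.
  apply: (rsum_cont (f := fun k s => rsum (fun l => reim (K s (munit k l) i j)))) => k.
  by apply: (rsum_cont (f := fun l s => reim (K s (munit k l) i j))) => l; apply/ccont_reim/Kc.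
case: (cont_bounded a b gc) => M [M_ge0 HM]; exists M; split=> // tau Htau.
apply: Rle_trans (HM tau Htau); do 4!apply: rsum_le => ?.
exact: Cmod_le_reim.
Qed.

Lemma Rdiv_INR_succ_le x n : 0 <= x -> x / INR n.+1 <= x.
Proof.
move=> x_ge0; have n1 : 1 <= INR n.+1 by rewrite S_INR; have := pos_INR n; lra.
rewrite -[X in _ <= X]Rmult_1_r; apply: Rmult_le_compat_l => //.
by rewrite -Rinv_1; apply: Rinv_le_contravar; lra.
Qed.

Definition powbound d (u : R -> Mat d) K n T :=
  forall s, 0 <= s <= T -> forall i j, Cmod (u s i j) <= K * s ^ n.

Lemma cint_pow_le f t K n : 0 <= t -> cex f 0 t ->
  (forall s, 0 <= s <= t -> Cmod (f s) <= K * s ^ n) ->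
  Cmod (cint f 0 t) <= K * (t ^ n.+1 / INR n.+1).
Proof.
move=> t_ge0 fi fb; rewrite Cmod_norm.
apply: (norm_RInt_le (V := C_R_NormedModule) f (fun s => K * s ^ n) 0 t) => //.
- by move=> x Hx; rewrite -Cmod_norm; apply: fb.
- exact: cex_cis.
have := is_RInt_scal _ _ _ K _ (is_RInt_pow 0 t n).
by rewrite /scal /= /mult /= Rmult_0_l /Rdiv Rmult_0_l Rminus_0_r.
Qed.

Section PowerBounds.
Variables (d : nat) (T : R).

Lemma powbound_mint (g : R -> Mat d) K n : mcont g -> powbound g K n T ->
  powbound (fun t => mint g 0 t) (K / INR n.+1) n.+1 T.
Proof.
move=> gc gb s Hs i j; apply: Rle_trans (cint_pow_le (K := K) (n := n) _ _ _) _.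
- lra.
- exact: ccont_cex.
- by move=> x Hx; apply: gb; lra.
- by rewrite /Rdiv; apply: Req_le; ring.
Qed.

Lemma powbound_linear (L : Mat d -> Mat d) (u : R -> Mat d) K n : is_linear_map L -> 0 <= K ->
  powbound u K n T -> powbound (fun s => L (u s)) (opnorm L * K) n T.
Proof.
move=> L_lin K_ge0 ub s Hs i j; rewrite Rmult_assoc; apply: linear_map_entry_le => //.
  by apply: Rmult_le_pos => //; apply: pow_le; lra.
by move=> k l; apply: ub.
Qed.

Lemma powbound_conv (K : R -> Mat d -> Mat d) (u : R -> Mat d) c k n :
  linfam K -> opcont K -> 0 <= k -> (forall tau, 0 <= tau <= T -> opnorm (K tau) <= c) ->
  mcont u -> powbound u k n T -> powbound (mconv K u) (c * k / INR n.+1) n.+1 T.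
Proof.
move=> K_lin Kc k_ge0 Kb uc ub s Hs i j; rewrite /mconv /mint.
apply: Rle_trans (cint_pow_le (K := c * k) (n := n) _ _ _) _.
- lra.
- exact: mex_conv_integrand.
- move=> x Hx; have x_pow : 0 <= k * x ^ n by apply: Rmult_le_pos => //; apply: pow_le; lra.
  apply: Rle_trans (linear_map_entry_le (K_lin (s - x)) x_pow (fun k l => ub x ltac:(lra) k l) i j) _.
  rewrite -Rmult_assoc; apply: Rmult_le_compat_r; first by apply: pow_le; lra.
  by apply: Rmult_le_compat_r => //; apply: Kb; lra.
- by rewrite /Rdiv; apply: Req_le; ring.
Qed.

Lemma powbound_add (u v : R -> Mat d) K1 K2 n :
  powbound u K1 n T -> powbound v K2 n T -> powbound (fun s => madd (u s) (v s)) (K1 + K2) n T.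
Proof.
move=> ub vb s Hs i j; apply: Rle_trans (Cmod_triangle _ _) _.
by have := ub s Hs i j; have := vb s Hs i j; lra.
Qed.

Lemma powbound_pred (u : R -> Mat d) K n : 0 <= K -> powbound u K n.+1 T -> powbound u (K * T) n T.
Proof.
move=> K_ge0 ub s Hs i j; apply: Rle_trans (ub s Hs i j) _; rewrite /=.
have := pow_le s n (proj1 Hs); have : 0 <= K * s ^ n by apply: Rmult_le_pos => //; apply: pow_le; lra.
by case: Hs; nra.
Qed.

Lemma powbound_le (u : R -> Mat d) K K' n : K <= K' -> powbound u K n T -> powbound u K' n T.
Proof.
move=> KK' ub s Hs i j; apply: Rle_trans (ub s Hs i j) _.
by apply: Rmult_le_compat_r => //; apply: pow_le; lra.
Qed.

Lemma powbound_ext (u v : R -> Mat d) K n :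
  (forall s, 0 <= s <= T -> u s = v s) -> powbound u K n T -> powbound v K n T.
Proof. by move=> uv ub s Hs i j; rewrite -uv //; apply: ub. Qed.

(* A bound improving by a factor C/(n+1) at each step yields M (C T)^n / n!, which tends to 0. *)
Lemma factorial_decay (e : nat -> R -> Mat d) M C :
  0 <= T -> 0 <= M -> 0 <= C -> powbound (e 0%nat) M 0 T ->
  (forall n K, 0 <= K -> powbound (e n) K n T -> powbound (e n.+1) (C * K / INR n.+1) n.+1 T) ->
  forall i j, clim (fun n => e n T i j) (RtoC 0).
Proof.
move=> T_ge0 M_ge0 C_ge0 e0 step i j.
have bound n : powbound (e n) (M * C ^ n / INR (fact n)) n T.
  elim: n => [|n IH]; first by rewrite /= /Rdiv Rinv_1 Rmult_1_r Rmult_1_r.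
  have Kn_ge0 : 0 <= M * C ^ n / INR (fact n).
    apply: Rmult_le_pos; first by apply: Rmult_le_pos => //; apply: pow_le.
    exact/Rlt_le/Rinv_0_lt_compat/INR_fact_lt_0.
  have -> : M * C ^ n.+1 / INR (fact n.+1) = C * (M * C ^ n / INR (fact n)) / INR n.+1.
    rewrite fact_simpl mult_INR [C ^ n.+1]/=; field.
    by split; [apply: INR_fact_neq_0 | apply: not_0_INR; lia].
  exact: step.
apply: (clim_zero_of_bound (b := fun n => M * ((C * T) ^ n / INR (fact n)))).
  have := is_lim_seq_scal_l _ M _ (proj2 (is_lim_seq_Reals _ _) (cv_speed_pow_fact (C * T))).
  by rewrite /= Rmult_0_r.
move=> n; apply: Rle_trans (bound n T ltac:(lra) i j) _.
by rewrite Rpow_mult_distr; apply: Req_le; rewrite /Rdiv; ring.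
Qed.

End PowerBounds.

(** * The renewal identity and the Dyson series *)

Definition opconv d (K M : R -> Mat d -> Mat d) (t : R) (x : Mat d) : Mat d :=
  mconv K (fun r => M r x) t.

Definition volterra d (L : Mat d -> Mat d) (Z : R -> Mat d -> Mat d) (v : R -> Mat d) (t : R) :=
  mint (fun s => madd (L (v s)) (mconv Z v s)) 0 t.

Section Volterra.
Variables (d : nat) (L : Mat d -> Mat d) (Z : R -> Mat d -> Mat d).
Hypotheses (L_lin : is_linear_map L) (Z_lin : linfam Z) (Zc : opcont Z).

Let L_mcont (v : R -> Mat d) : mcont v -> mcont (fun s => L (v s)).
Proof. by move=> vc; apply: (mcont_app (K := fun _ => L)) => // x; apply: mcont_const. Qed.

Lemma mcont_volterra_integrand v : mcont v -> mcont (fun s => madd (L (v s)) (mconv Z v s)).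
Proof. by move=> vc; apply: mcont_add; [apply: L_mcont | apply: mcont_conv]. Qed.

Lemma volterra_add u v t : mcont u -> mcont v ->
  volterra L Z (fun s => madd (u s) (v s)) t = madd (volterra L Z u t) (volterra L Z v t).
Proof.
move=> uc vc; rewrite /volterra -mint_add; try exact/mcont_mex/mcont_volterra_integrand.
apply: mat_ext => i j; apply: cint_ext => s _.
by rewrite (proj1 L_lin) mconv_addr // /madd; ring.
Qed.

Lemma volterra_sub u v t : mcont u -> mcont v ->
  volterra L Z (fun s => msub (u s) (v s)) t = msub (volterra L Z u t) (volterra L Z v t).
Proof.
move=> uc vc; apply: mat_ext => i j; rewrite /volterra /mint /msub -cint_minus;
  try by apply: ccont_cex; apply: mcont_volterra_integrand.
apply: cint_ext => s _.
by rewrite (linear_map_msub L_lin) mconv_subr //; rewrite /madd /msub; ring.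
Qed.

Lemma volterra_zero (e : R -> Mat d) :
  mcont e -> (forall t, 0 <= t -> e t = volterra L Z e t) -> forall t, 0 <= t -> e t = mzero d.
Proof.
move=> ec e_eq t t_ge0.
case: (mcont_bounded 0 t ec) => M [M_ge0 HM].
case: (opnorm_bounded 0 t Zc) => cZ [cZ_ge0 HcZ].
have cL_ge0 := opnorm_ge0 L.
pose C := opnorm L + cZ * t.
have step n K : 0 <= K -> powbound e K n t -> powbound e (C * K / INR n.+1) n.+1 t.
  move=> K_ge0 eb; apply: (powbound_ext (u := volterra L Z e)) => [s Hs|].
    by rewrite -e_eq //; lra.
  apply: powbound_mint; first exact: mcont_volterra_integrand.
  apply: powbound_le (powbound_add (powbound_linear L_lin K_ge0 eb)
                       (powbound_pred _ (powbound_conv Z_lin Zc K_ge0 HcZ ec eb))).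
    have := Rdiv_INR_succ_le n (Rmult_le_pos _ _ cZ_ge0 K_ge0).
    by rewrite /C; nra.
  by apply: Rdiv_le_0_compat; [nra | apply: lt_0_INR; lia].
have e0 : powbound e M 0 t by move=> s Hs i j; rewrite Rmult_1_r; apply: HM.
have C_ge0 : 0 <= C by rewrite /C; nra.
have lim0 := factorial_decay (e := fun _ => e) t_ge0 M_ge0 C_ge0 e0 step.
by apply: mat_ext => i j; apply: clim_unique (clim_const (e t i j)) (lim0 i j).
Qed.

End Volterra.

Section ConvolutionAlgebra.
Variables (d : nat) (K M : R -> Mat d -> Mat d).
Hypotheses (K_lin : linfam K) (Kc : opcont K) (M_lin : linfam M) (Mc : opcont M).

Lemma opconv_linfam : linfam (opconv K M).
Proof. by move=> t; apply: mconv_linear. Qed.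

Lemma opconv_opcont : opcont (opconv K M).
Proof. by move=> x; apply: mcont_conv. Qed.

Lemma mconv_assoc (y : R -> Mat d) s : mcont y ->
  mconv K (mconv M y) s = mconv (opconv K M) y s.
Proof.
move=> yc; apply: mat_ext => i j.
have P2 : ccont2 (fun r sg => K (-1 * r + -1 * sg + s) (M r (y sg)) i j).
  by apply: ccont2_linfam_app => // k l; apply: ccont2_linfam_app_snd.
rewrite /mconv /opconv /mconv /mint.
rewrite (cint_ext (f := fun sg => cint (fun tau => K (s - sg - tau) (M tau (y sg)) i j) 0 (s - sg))
                  (g := fun sg => cint (fun r => K (-1 * r + -1 * sg + s) (M r (y sg)) i j) 0 (s - sg))); last first.
  by move=> sg _; apply: cint_ext => r _; congr K; ring.
rewrite cint_conv_swap //; apply: cint_ext => rho _.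
rewrite (linear_map_mint (K_lin _)); last exact: mex_conv_integrand.
by apply: cint_ext => sg _; congr K; ring.
Qed.

End ConvolutionAlgebra.

Lemma mconv_integral_family d (M D : R -> Mat d -> Mat d) (y : R -> Mat d) t :
  linfam D -> opcont D -> mcont y -> 0 <= t ->
  (forall x s, 0 <= s -> M s x = madd x (mint (fun r => D r x) 0 s)) ->
  mconv M y t = madd (mint y 0 t) (mint (mconv D y) 0 t).
Proof.
move=> D_lin Dc yc t_ge0 M_eq; apply: mat_ext => i j.
have P2 := ccont2_linfam_app_snd D_lin Dc i j yc.
rewrite /mconv /mint /madd.
rewrite (cint_ext (g := fun sg => Cplus (y sg i j) (cint (fun tau => D tau (y sg) i j) 0 (t - sg)))); last first.
  move=> sg Hsg; rewrite M_eq //.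
  by move: Hsg; rewrite /Rmin /Rmax; case: Rle_dec => _; lra.
rewrite cint_plus; first by rewrite cint_conv_swap.
  exact: ccont_cex.
apply: ccont_cex; have := ccont_cint_param 0 0 (-1) t (ccont2_swap P2).
by apply: ccont_ext => sg; rewrite Rmult_0_l Rplus_0_l; congr cint; ring.
Qed.


Section Renewal.
Variables (d : nat) (L : Mat d -> Mat d) (Z N : R -> Mat d -> Mat d).
Hypotheses (L_lin : is_linear_map L) (Z_lin : linfam Z) (Zc : opcont Z).
Hypotheses (N_lin : linfam N) (Nc : opcont N).
Hypothesis N_eq : forall x t, 0 <= t -> N t x = madd x (volterra L Z (fun s => N s x) t).

Let Ndot s x := madd (L (N s x)) (opconv Z N s x).

Let Ndot_linfam : linfam Ndot.
Proof.
move=> s; apply: madd_linear; last exact: opconv_linfam.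
by case: L_lin => La Ls; case: (N_lin s) => Na Ns; split=> [x y|c x]; rewrite ?Na ?La ?Ns ?Ls.
Qed.

Let Ndot_opcont : opcont Ndot.
Proof.
move=> x; apply: mcont_add; last exact: opconv_opcont.
by apply: (mcont_app (K := fun _ => L)) => // z; apply: mcont_const.
Qed.

Lemma mconv_N_eq y t : mcont y -> 0 <= t ->
  mconv N y t = madd (mint y 0 t) (volterra L Z (mconv N y) t).
Proof.
move=> yc t_ge0.
rewrite (mconv_integral_family Ndot_linfam Ndot_opcont yc t_ge0 N_eq); congr madd.
have Nyc s : mex (fun r => N (s - r) (y r)) 0 s by apply: mex_conv_integrand.
have shifted (K : R -> Mat d -> Mat d) s : linfam K -> opcont K -> mcont (fun r => K (s - r) (y r)).
  move=> K_lin Kc; apply: (mcont_app (K := fun r => K (s - r))) => [r||];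
    [exact: K_lin | exact: opcont_sub | exact: yc].
have E s : mconv Ndot y s = madd (L (mconv N y s)) (mconv Z (mconv N y) s).
  rewrite (mconv_assoc Z_lin Zc N_lin Nc) // {2}/mconv (linear_map_mint L_lin) // -mint_add //.
    apply/mcont_mex/(mcont_app (K := fun _ => L)) => // [? | ]; first exact: mcont_const.
    exact: shifted.
  apply/mcont_mex/shifted; first exact: opconv_linfam.
  exact: opconv_opcont.
by congr mint; apply: functional_extensionality => s; rewrite E.
Qed.

(* Both sides solve v = a + volterra v + int (B * u), so their difference solves the homogeneous equation. *)
Lemma renewal_eq (B : R -> Mat d -> Mat d) (u : R -> Mat d) a :
  linfam B -> opcont B -> mcont u ->
  (forall t, 0 <= t -> u t = madd a (madd (volterra L Z u t) (mint (mconv B u) 0 t))) ->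
  forall t, 0 <= t -> u t = madd (N t a) (mconv N (mconv B u) t).
Proof.
move=> B_lin Bc uc u_eq.
set y := mconv B u; have yc : mcont y := mcont_conv B_lin Bc uc.
set w := fun t => madd (N t a) (mconv N y t).
have Nyc : mcont (mconv N y) := mcont_conv N_lin Nc yc.
have wc : mcont w by apply: mcont_add; [apply: Nc | apply: Nyc].
have w_eq t : 0 <= t -> w t = madd a (madd (volterra L Z w t) (mint y 0 t)).
  move=> t_ge0; rewrite /w (@N_eq a t t_ge0) (mconv_N_eq yc t_ge0) (volterra_add L_lin Z_lin Zc t (Nc a) Nyc).
  by apply: mat_ext => i j; rewrite /madd /=; ring.
have diff t : 0 <= t -> msub (w t) (u t) = volterra L Z (fun s => msub (w s) (u s)) t.
  move=> t_ge0; rewrite volterra_sub // {1}(w_eq t t_ge0) {1}(u_eq t t_ge0).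
  by apply: mat_ext => i j; rewrite /msub /madd /Cminus -/y /=; ring.
move=> t t_ge0; apply: mat_ext => i j.
have := congr1 (fun M => M i j) (volterra_zero L_lin Z_lin Zc (mcont_sub wc uc) diff t_ge0).
by move/Cminus_eq0.
Qed.

End Renewal.

Section DysonSeries.
Variables (d : nat) (N B : R -> Mat d -> Mat d).
Hypotheses (N_lin : linfam N) (Nc : opcont N) (B_lin : linfam B) (Bc : opcont B).

Lemma dyson_remainder_lim (e : nat -> R -> Mat d) t :
  (forall n, mcont (e n)) -> (forall n s, 0 <= s -> e n.+1 s = mconv N (mconv B (e n)) s) ->
  0 <= t -> forall i j, clim (fun n => e n t i j) (RtoC 0).
Proof.
move=> ec e_eq t_ge0.
case: (mcont_bounded 0 t (ec 0%nat)) => M [M_ge0 HM].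
case: (opnorm_bounded 0 t Nc) => cN [cN_ge0 HcN].
case: (opnorm_bounded 0 t Bc) => cB [cB_ge0 HcB].
have C_ge0 : 0 <= cN * cB * t by apply: Rmult_le_pos => //; apply: Rmult_le_pos.
apply: (factorial_decay t_ge0 M_ge0 C_ge0) => [s Hs i j|n K K_ge0 eb].
  by rewrite Rmult_1_r; apply: HM.
have BK_ge0 : 0 <= cB * K / INR n.+1 by apply: Rdiv_le_0_compat; [nra | apply: lt_0_INR; lia].
have NBK_ge0 : 0 <= cN * (cB * K / INR n.+1) / INR n.+2.
  by apply: Rdiv_le_0_compat; [nra | apply: lt_0_INR; lia].
have := powbound_pred NBK_ge0 (powbound_conv N_lin Nc BK_ge0 HcN (mcont_conv B_lin Bc (ec n))
                         (powbound_conv B_lin Bc K_ge0 HcB (ec n) eb)).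
move/(powbound_ext (v := e n.+1)) => /(_ (fun s Hs => esym (e_eq n s (proj1 Hs)))).
apply: powbound_le.
have := Rdiv_INR_succ_le n.+1 (Rmult_le_pos _ _ (Rmult_le_pos _ _ cN_ge0 BK_ge0) t_ge0).
by rewrite /Rdiv; nra.
Qed.

Fixpoint dyson (n : nat) : R -> Mat d -> Mat d :=
  if n is m.+1 then fun t x => madd (N t x) (opconv N (opconv B (dyson m)) t x) else N.

End DysonSeries.

Lemma CP_linfam d (K : R -> Mat d -> Mat d) : (forall s, CP (K s)) -> linfam K.
Proof. by move=> K_CP s; case: (K_CP s). Qed.

Lemma CP_opconv d (K M : R -> Mat d -> Mat d) t :
  (forall s, CP (K s)) -> opcont K -> (forall r, 0 <= r -> CP (M r)) -> opcont M -> 0 <= t ->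
  CP (opconv K M t).
Proof.
move=> K_CP Kc M_CP Mc t_ge0.
apply: (CP_mint (Phi := fun s x => K (t - s) (M s x))) => // [s Hs|x].
  by apply: CP_comp => //; apply: M_CP; case: Hs.
by apply: (mcont_app (K := fun s => K (t - s))) => //; [move=> s; case: (K_CP (t - s)) | apply: opcont_sub].
Qed.

Section DysonCP.
Variables (d : nat) (N B : R -> Mat d -> Mat d).
Hypotheses (N_CP : forall s, CP (N s)) (Nc : opcont N) (B_CP : forall s, CP (B s)) (Bc : opcont B).

Lemma dyson_regular n :
  [/\ linfam (dyson N B n), opcont (dyson N B n) & forall t, 0 <= t -> CP (dyson N B n t)].
Proof.
have N_lin := CP_linfam N_CP; have B_lin := CP_linfam B_CP.
elim: n => [|n [D_lin Dc D_CP]] /=; first by split=> // t _.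
have BD_lin : linfam (opconv B (dyson N B n)) by apply: opconv_linfam.
have BDc : opcont (opconv B (dyson N B n)) by apply: opconv_opcont.
split=> [t|x|t t_ge0].
- by apply: madd_linear; [apply: N_lin | apply: opconv_linfam].
- by apply: mcont_add; [apply: Nc | apply: opconv_opcont].
- apply: CP_add => //; apply: CP_opconv => // r r_ge0.
  exact: CP_opconv.
Qed.

End DysonCP.

Lemma CP_of_renewal d (L : Mat d -> Mat d) (Z B N A : R -> Mat d -> Mat d) :
  is_linear_map L -> linfam Z -> opcont Z ->
  (forall s, CP (B s)) -> opcont B -> (forall s, CP (N s)) -> opcont N ->
  (forall x t, 0 <= t -> N t x = madd x (volterra L Z (fun s => N s x) t)) ->
  (forall a, mcont (fun t => A t a)) ->
  (forall a t, 0 <= t ->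
     A t a = madd a (madd (volterra L Z (fun s => A s a) t) (mint (mconv B (fun s => A s a)) 0 t))) ->
  forall t, 0 <= t -> CP (A t).
Proof.
move=> L_lin Z_lin Zc B_CP Bc N_CP Nc N_eq Ac A_eq t t_ge0.
have B_lin := CP_linfam B_CP; have N_lin := CP_linfam N_CP.
have D n := dyson_regular N_CP Nc B_CP Bc n.
apply: (CP_lim (Phin := fun n => dyson N B n t)) => [n|a i j]; first by case: (D n) => _ _; apply.
pose e n s := msub (A s a) (dyson N B n s a).
have ec n : mcont (e n) by case: (D n) => _ Dc _; apply: mcont_sub.
have e_eq n s : 0 <= s -> e n.+1 s = mconv N (mconv B (e n)) s.
  move=> s_ge0; case: (D n) => _ Dc _.
  rewrite /e (renewal_eq L_lin Z_lin Zc N_lin Nc N_eq B_lin Bc (Ac a) (A_eq a)) //=.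
  rewrite (_ : mconv B (fun r => msub (A r a) (dyson N B n r a)) =
               fun r => msub (mconv B (A^~ a) r) (mconv B (fun r' => dyson N B n r' a) r)).
    rewrite mconv_subr //; try exact: mcont_conv.
    have -> : opconv N (opconv B (dyson N B n)) s a = mconv N (mconv B (fun r => dyson N B n r a)) s by [].
    by apply: mat_ext => i' j'; rewrite /msub /madd /Cminus; ring.
  by apply: functional_extensionality => r; apply: mconv_subr.
have := clim_plus (clim_const (A t a i j))
          (clim_cmul (RtoC (-1)) (dyson_remainder_lim N_lin Nc B_lin Bc ec e_eq t_ge0 i j)).
rewrite (_ : Cplus _ (Cmult _ (RtoC 0)) = A t a i j); last by ring.
by apply: clim_ext => n; rewrite /e /msub /Cminus; ring.
Qed.

(** * From the differential equations to integral equations *)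

Lemma ball_C_Cmod (z w : C) e : ball z e w -> Cmod (Cminus w z) < 2 * e.
Proof.
case: z w => [z1 z2] [w1 w2] [H1 H2].
change (Rabs (w1 - z1) < e) in H1; change (Rabs (w2 - z2) < e) in H2.
apply: Rle_lt_trans (Cmod_le_reim _) _; rewrite /Cminus /Re /Im /= -!/(Rminus _ _); lra.
Qed.

Lemma continuous_C_eps (f : R -> C) t : continuous f t ->
  forall eps, 0 < eps -> exists del, 0 < del /\
    forall y, Rabs (y - t) < del -> Cmod (Cminus (f y) (f t)) < eps.
Proof.
move=> fc eps eps_gt0; case: (proj1 (filterlim_locally f (f t)) fc (mkposreal (eps / 2) ltac:(lra))) => del Hd.
exists del; split=> [|y Hy]; first exact: cond_pos.
by have /= := ball_C_Cmod (Hd y Hy); lra.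
Qed.

Lemma at_right0_C_eps (f : R -> C) : filterlim f (at_right 0) (locally (f 0)) ->
  forall eps, 0 < eps -> exists del, 0 < del /\
    forall y, 0 < y < del -> Cmod (Cminus (f y) (f 0)) < eps.
Proof.
move=> fc eps eps_gt0; case: (proj1 (filterlim_locally f (f 0)) fc (mkposreal (eps / 2) ltac:(lra))) => del Hd.
exists del; split=> [|y [y_gt0 y_lt]]; first exact: cond_pos.
have y_ball : ball 0 del y by change (Rabs (y - 0) < del); rewrite Rminus_0_r Rabs_pos_eq; lra.
by have /= := ball_C_Cmod (Hd y y_ball y_gt0); lra.
Qed.

Lemma ccont_Rmax0 (f : R -> C) : cont_nonneg f -> ccont (fun t => f (Rmax 0 t)).
Proof.
move=> [f_pos f_0]; apply: ccont_of_eps => x0 eps eps_gt0.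
case: (Rtotal_order x0 0) => [x0_lt0|[->|x0_gt0]].
- exists (- x0); split=> [|y Hy]; first lra.
  by rewrite !Rmax_left ?Cminus_diag ?Cmod_0 //; move: Hy; split_Rabs; lra.
- case: (at_right0_C_eps f_0 eps_gt0) => del [del_gt0 Hdel].
  exists del; split=> // y Hy; rewrite (Rmax_left 0 0); last lra.
  case: (Rle_lt_dec y 0) => [y_le0|y_gt0]; first by rewrite Rmax_left // Cminus_diag Cmod_0.
  by rewrite Rmax_right; [apply: Hdel; move: Hy; split_Rabs | ]; lra.
- case: (continuous_C_eps (f_pos x0 x0_gt0) eps_gt0) => del [del_gt0 Hdel].
  exists (Rmin del x0); split=> [|y Hy]; first by apply: Rmin_pos; lra.
  have Hy1 : Rabs (y - x0) < del by apply: Rlt_le_trans Hy (Rmin_l _ _).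
  have Hy2 : Rabs (y - x0) < x0 by apply: Rlt_le_trans Hy (Rmin_r _ _).
  by rewrite !Rmax_right; [apply: Hdel | | ]; move: Hy2; split_Rabs; lra.
Qed.

Lemma ccont_cint_upper g a : ccont g -> ccont (fun s => cint g a s).
Proof.
move=> gc; have := ccont_cint_param 0 a 1 0 (ccont2_snd gc).
by apply: ccont_ext => s; rewrite Rmult_0_l Rplus_0_l Rmult_1_l Rplus_0_r.
Qed.

Lemma ccont_const_on (f : R -> C) t : ccont f -> 0 <= t ->
  (forall y, 0 < y <= t -> f y = f t) -> f 0 = f t.
Proof.
move=> fc t_ge0 f_const; case: (Rle_lt_or_eq_dec _ _ t_ge0) => [t_gt0|<-] //.
apply: Cmod_small_eq => eps eps_gt0.
case: (ccont_unif 0 t fc eps_gt0) => del [del_gt0 Hdel].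
set y := Rmin (del / 2) t.
have y_pos : 0 < y by apply: Rmin_pos; lra.
have y_le : y <= t by apply: Rmin_r.
have y_half : y <= del / 2 by apply: Rmin_l.
rewrite -(f_const y); last by split.
by apply: Hdel; rewrite ?Rminus_0_l ?Rabs_Ropp ?Rabs_pos_eq; lra.
Qed.

Lemma cint_of_cderiv (phi g : R -> C) t :
  cont_nonneg phi -> ccont g -> (forall s, 0 < s -> cderiv phi s (g s)) -> 0 <= t ->
  phi t = Cplus (phi 0) (cint g 0 t).
Proof.
move=> phic gc phi' t_ge0.
pose psi s := Cminus (phi (Rmax 0 s)) (cint g 0 s).
have psic : ccont psi by apply: ccont_minus; [apply: ccont_Rmax0 | apply: ccont_cint_upper].
have psi_const y : 0 < y <= t -> psi y = psi t.
  move=> [y_gt0 y_le]; rewrite /psi !Rmax_right; try lra.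
  case: (Rle_lt_or_eq_dec _ _ y_le) => [y_lt|->] //.
  apply: (eq_is_derive (V := C_R_NormedModule) (fun s => Cminus (phi s) (cint g 0 s))) => // s Hs.
  have : cderiv (fun s => Cminus (phi s) (cint g 0 s)) s (Cminus (g s) (g s)).
    by apply: cderiv_minus; [apply: phi'; lra | apply: cderiv_cint].
  by rewrite Cminus_diag.
have := ccont_const_on psic t_ge0 psi_const.
rewrite /psi (Rmax_right 0 t t_ge0) (Rmax_left 0 0 (Rle_refl 0)) cint_point => E.
have <- : Cplus (Cminus (phi t) (cint g 0 t)) (cint g 0 t) = phi t by rewrite /Cminus; ring.
by rewrite -E /Cminus; ring.
Qed.

Lemma opcont_Zgen d (hh : R -> Mat d) (B : R -> Mat d -> Mat d) :
  mcont hh -> opcont B -> opcont (fun s => Zgen (hh s) (B s)).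
Proof.
move=> hc Bc x; rewrite /Zgen /anticomm /comm.
apply: mcont_add; apply: mcont_scale; apply: mcont_add; try apply: mcont_scale;
  apply: mcont_mmul => //; apply: mcont_const.
Qed.

Lemma mconv_addl d (B Z : R -> Mat d -> Mat d) u t : linfam B -> opcont B -> linfam Z -> opcont Z ->
  mcont u -> mconv (fun s x => madd (B s x) (Z s x)) u t = madd (mconv B u t) (mconv Z u t).
Proof. by move=> B_lin Bc Z_lin Zc uc; rewrite /mconv -mint_add //; apply: mex_conv_integrand. Qed.

Lemma volterra_kernel_add d (L : Mat d -> Mat d) (B Z : R -> Mat d -> Mat d) u t :
  is_linear_map L -> linfam B -> opcont B -> linfam Z -> opcont Z -> mcont u ->
  volterra L (fun s x => madd (B s x) (Z s x)) u t =
  madd (volterra L Z u t) (mint (mconv B u) 0 t).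
Proof.
move=> L_lin B_lin Bc Z_lin Zc uc; rewrite /volterra -mint_add.
- apply: mat_ext => i j; apply: cint_ext => s _.
  by rewrite mconv_addl // /madd; ring.
- exact/mcont_mex/mcont_volterra_integrand.
- exact/mcont_mex/mcont_conv.
Qed.

Lemma solution_opcont d (K0 : Mat d -> Mat d) (K X : R -> Mat d -> Mat d) :
  is_solution K0 K X -> opcont (fun s => X (Rmax 0 s)).
Proof. by move=> [_ [Xc _]] x i j; exact: ccont_Rmax0 (Xc x i j). Qed.

Section Solutions.
Variables (d : nat) (K0 : Mat d -> Mat d) (K X : R -> Mat d -> Mat d).
Hypotheses (K0_lin : is_linear_map K0) (K_lin : linfam (fun s => K (Rmax 0 s))).
Hypothesis Kc : opcont (fun s => K (Rmax 0 s)).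

Lemma is_solution_volterra : is_solution K0 K X ->
  forall a t, 0 <= t -> X t a = madd a (volterra K0 (fun s => K (Rmax 0 s)) (fun s => X (Rmax 0 s) a) t).
Proof.
move=> [X0 [Xc X']] a t t_ge0; apply: mat_ext => i j.
have X'c := solution_opcont (conj X0 (conj Xc X')) a.
rewrite (cint_of_cderiv (Xc a i j) (mcont_volterra_integrand K0_lin K_lin Kc X'c i j) _ t_ge0).
  by rewrite X0.
move=> r r_gt0; rewrite /madd /mconv /mint Rmax_right; last lra.
have -> : cint (fun s => K (Rmax 0 (r - s)) (X (Rmax 0 s) a) i j) 0 r =
          RInt (V := C_R_CompleteNormedModule) (fun s => K (r - s) (X s a) i j) 0 r.
  apply: cint_ext => s Hs.
  have {Hs} Hs : 0 < s < r by move: Hs; rewrite /Rmin /Rmax; case: Rle_dec; lra.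
  by rewrite !Rmax_right //; lra.
exact: X'.
Qed.

End Solutions.

Unset Implicit Arguments. Set Strict Implicit.

Theorem mainTheorem1 (d : nat) (h : Mat d) (F : Mat d -> Mat d)
  (B : R -> Mat d -> Mat d) (hh : R -> Mat d)
  (A N : R -> Mat d -> Mat d) :
  hermitian h ->
  CP F ->
  (forall t, 0 <= t -> CP (B t)) ->
  (forall t, 0 <= t -> hermitian (hh t)) ->
  (forall a i j, cont_nonneg (fun t => B t a i j)) ->
  (forall i j, cont_nonneg (fun t => hh t i j)) ->
  is_solution (Lgen h F) (fun t a => madd (B t a) (Zgen (hh t) (B t) a)) A ->
  is_solution (Lgen h F) (fun t => Zgen (hh t) (B t)) N ->
  (forall t, 0 <= t -> CP (N t)) ->
  forall t, 0 <= t -> CP (A t).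
Proof.
move=> _ F_CP B_CP _ Bc hc A_sol N_sol N_CP t t_ge0.
(* The data live on [0, +oo); freezing them at their value at 0 on (-oo, 0] gives continuous families on R. *)
pose B' s := B (Rmax 0 s); pose Z' s := Zgen (hh (Rmax 0 s)) (B' s).
have L_lin := Lgen_linear h (proj1 F_CP).
have B'_CP s : CP (B' s) by apply/B_CP/Rmax_l.
have N'_CP s : CP (N (Rmax 0 s)) by apply/N_CP/Rmax_l.
have B'c : opcont B' by move=> x i j; exact: ccont_Rmax0 (Bc x i j).
have Z'c : opcont Z' by apply: opcont_Zgen => // i j; exact: ccont_Rmax0 (hc i j).
have Z'_lin : linfam Z' by move=> s; apply: Zgen_linear.
have BZ_lin : linfam (fun s x => madd (B' s x) (Z' s x)).
  by move=> s; apply: madd_linear; [case: (B'_CP s) | apply: Z'_lin].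
rewrite -(Rmax_right 0 t t_ge0).
apply: (CP_of_renewal (A := fun s => A (Rmax 0 s)) L_lin Z'_lin Z'c B'_CP B'c N'_CP (solution_opcont N_sol))
  => [x s s_ge0|a|a s s_ge0|] //.
- by rewrite {1}(Rmax_right 0 s s_ge0) (is_solution_volterra L_lin Z'_lin Z'c N_sol).
- exact: solution_opcont A_sol a.
- rewrite {1}(Rmax_right 0 s s_ge0).
  rewrite (is_solution_volterra L_lin BZ_lin (fun x => mcont_add (B'c x) (Z'c x)) A_sol) //.
  by rewrite volterra_kernel_add //; [apply: CP_linfam | exact: solution_opcont A_sol a].
Qed.
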